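(* Let $F=\mathrm{F}(1,\langle2\rangle,\mathbb Z[\tfrac12])$, $T=\mathrm{T}(1,\langle2\rangle,\mathbb Z[\tfrac12])$, $V=\mathrm{V}(1,\langle2\rangle,\mathbb Z[\tfrac12])$ (Thompson's groups). Let $x_0,x_1\in F$ be given by $$(t)x_0=\begin{cases}2t,&t\in[0,\tfrac14]\\ t+\tfrac14,&t\in[\tfrac14,\tfrac12]\\ \tfrac t2+\tfrac12,&t\in[\tfrac12,1)\end{cases}\qquad (t)x_1=\begin{cases}t,&t\in[0,\tfrac12]\\ 2t-\tfrac12,&t\in[\tfrac12,\tfrac58]\\ t+\tfrac18,&t\in[\tfrac58,\tfrac34]\\ \tfrac t2+\tfrac12,&t\in[\tfrac34,1)\end{cases}$$ and let $a=x_0^2$, $b=x_1x_0^{-1}x_1^{-1}x_0$ (product of right-acting maps). Then $\langle a,b\rangle=\langle b\rangle\wr\langle a\rangle\cong\mathbb Z\wr\mathbb Z$, and there is a single first-order formula in the group language with parameters from $F$ which defines the subgroup $\langle a,b\rangle$ in each of $F$, $T$ and $V$.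
   Context: $\mathrm{V}(r,\Lambda,A)$ is the group of bijections $x\colon[0,r)\to[0,r)$ that are piecewise affine with finitely many cuts and singular points, right-continuous everywhere, all slopes in $\Lambda$, all cut/singular points and their images in $A$; $\mathrm{F}(r,\Lambda,A)$ is its subgroup of elements continuous in the usual topology, $\mathrm{T}(r,\Lambda,A)$ its subgroup of elements continuous in the circle topology of $[0,r)\cong[0,r]/\{0,r\}$. Maps act on the right: $(t)(xy)=((t)x)y$. $\langle b\rangle\wr\langle a\rangle$ denotes the restricted wreath product: the conjugates $a^{-k}ba^k$ ($k\in\mathbb Z$) generate a free abelian group with basis $(a^{-k}ba^k)_k$, and $\langle a,b\rangle$ is its semidirect product with the infinite cyclic group $\langle a\rangle$. *)

From Stdlib Require Import Reals ZArith List ClassicalEpsilon.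
Open Scope R_scope.

Definition dyadic (x : R) : Prop := exists (m : Z) (k : nat), x = IZR m / 2 ^ k.

Definition in01 (t : R) : Prop := 0 <= t < 1.

(** Elements of V(1,<2>,Z[1/2]) are represented as maps R -> R that act as the
    identity outside [0,1) (so composition and equality are those of maps). *)

Definition pw_affine_dyadic (f : R -> R) : Prop :=
  exists (n : nat) (p : nat -> R),
    (0 < n)%nat /\ p O = 0 /\ p n = 1 /\
    (forall i, (i <= n)%nat -> dyadic (p i)) /\
    (forall i, (i < n)%nat -> p i < p (S i)) /\
    (forall i, (i < n)%nat ->
       dyadic (f (p i)) /\
       exists k : Z, forall t, p i <= t < p (S i) ->
         f t = f (p i) + powerRZ 2 k * (t - p i)).

Definition Vel (f : R -> R) : Prop :=
  (forall t, ~ in01 t -> f t = t) /\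
  (forall t, in01 t -> in01 (f t)) /\
  (forall s t, in01 s -> in01 t -> f s = f t -> s = t) /\
  (forall u, in01 u -> exists t, in01 t /\ f t = u) /\
  pw_affine_dyadic f.

(** F: continuous on [0,1) in the usual topology. *)
Definition Fel (f : R -> R) : Prop :=
  Vel f /\
  forall t, in01 t -> forall eps, 0 < eps -> exists delta, 0 < delta /\
    forall s, in01 s -> Rabs (s - t) < delta -> Rabs (f s - f t) < eps.

Definition circ_dist (x y : R) : R := Rmin (Rabs (x - y)) (1 - Rabs (x - y)).

(** T: continuous in the circle topology. *)
Definition Tel (f : R -> R) : Prop :=
  Vel f /\
  forall t, in01 t -> forall eps, 0 < eps -> exists delta, 0 < delta /\
    forall s, in01 s -> circ_dist s t < delta -> circ_dist (f s) (f t) < eps.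

(** Group operations; maps act on the right: (t)(xy) = ((t)x)y. *)
Definition mul (f g : R -> R) : R -> R := fun t => g (f t).
Definition one : R -> R := fun t => t.
Definition inv (f : R -> R) : R -> R :=
  fun t => epsilon (inhabits 0) (fun s => f s = t).

Definition npow (f : R -> R) (n : nat) : R -> R := Nat.iter n (fun g => mul g f) one.
Definition zpow (f : R -> R) (z : Z) : R -> R :=
  match z with
  | Z0 => one
  | Zpos q => npow f (Pos.to_nat q)
  | Zneg q => npow (inv f) (Pos.to_nat q)
  end.

Definition x0 (t : R) : R :=
  if Rlt_dec t 0 then t
  else if Rlt_dec t (1/4) then 2 * t
  else if Rlt_dec t (1/2) then t + 1/4
  else if Rlt_dec t 1 then t / 2 + 1/2
  else t.

Definition x1 (t : R) : R :=
  if Rlt_dec t 0 then t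
  else if Rlt_dec t (1/2) then t
  else if Rlt_dec t (5/8) then 2 * t - 1/2
  else if Rlt_dec t (3/4) then t + 1/8
  else if Rlt_dec t 1 then t / 2 + 1/2
  else t.

Definition a : R -> R := mul x0 x0.
Definition b : R -> R := mul (mul (mul x1 (inv x0)) (inv x1)) x0.

Definition bk (k : Z) : R -> R := mul (mul (zpow a (- k)) b) (zpow a k).

Definition zrange (N : nat) : list Z :=
  map (fun i => (Z.of_nat i - Z.of_nat N)%Z) (seq 0 (2 * N + 1)).
Definition zprod (N : nat) (h : Z -> (R -> R)) : R -> R :=
  fold_right mul one (map h (zrange N)).

Inductive gen2 (u v : R -> R) : (R -> R) -> Prop :=
| gen2_l : gen2 u v u
| gen2_r : gen2 u v v
| gen2_one : gen2 u v one
| gen2_mul : forall f g, gen2 u v f -> gen2 u v g -> gen2 u v (mul f g)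
| gen2_inv : forall f, gen2 u v f -> gen2 u v (inv f).

(** First-order logic in the language of groups {*, ^-1, 1},
    with parameters (constants tpar i, interpreted by a list of elements). *)
Inductive term : Type :=
| tvar : nat -> term
| tpar : nat -> term
| tone : term
| tmul : term -> term -> term
| tinv : term -> term.

Inductive formula : Type :=
| feq : term -> term -> formula
| fnot : formula -> formula
| fand : formula -> formula -> formula
| fex : nat -> formula -> formula.

Fixpoint teval (ps : list (R -> R)) (env : nat -> (R -> R)) (t : term) : R -> R :=
  match t with
  | tvar n => env n
  | tpar n => nth n ps one
  | tone => one
  | tmul t1 t2 => mul (teval ps env t1) (teval ps env t2)
  | tinv t1 => inv (teval ps env t1)
  end.

Definition upd (env : nat -> (R -> R)) (n : nat) (x : R -> R) : nat -> (R -> R) :=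
  fun m => if Nat.eqb m n then x else env m.

Fixpoint sat (D : (R -> R) -> Prop) (ps : list (R -> R))
         (env : nat -> (R -> R)) (phi : formula) : Prop :=
  match phi with
  | feq t1 t2 => teval ps env t1 = teval ps env t2
  | fnot p => ~ sat D ps env p
  | fand p q => sat D ps env p /\ sat D ps env q
  | fex n p => exists x, D x /\ sat D ps (upd env n x) p
  end.

(** phi (free variable 0; any other free variable is read as 1) with
    parameters ps defines the subset P of the group D. *)
Definition defines (D : (R -> R) -> Prop) (ps : list (R -> R)) (phi : formula)
           (P : (R -> R) -> Prop) : Prop :=
  forall g, D g ->
    (sat D ps (fun n => match n with O => g | S _ => one end) phi <-> P g).

From Stdlib Require Import Reals ZArith List ClassicalEpsilon Classical Lia Lra FunctionalExtensionality.
Open Scope R_scope.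

(* Elements of V are maps R -> R acting on [0,1) and fixing the rest; products are
   compositions read left to right.  The argument is dynamical.
   - Explicitly, b is supported on (1/2, 7/8), and a^k maps this interval onto
     pairwise disjoint intervals A_k(1/2, 7/8).  Hence the conjugates b_k = a^-k b a^k
     have disjoint supports: they commute, and a product of their powers times a power
     of a is the identity only if all exponents vanish.
   - The defining formula is
       phi(g) := exists y h, [y,x0] = 1 /\ h commutes with every z = w^-2 b w^2 for
                 which [w,x0] = 1 /\ g = y^2 h,
     with b written as a word in the parameters x0, x1.  It works because of two
     centralizer computations in V: the centralizer of x0 is <x0> (so the z above are
     exactly the b_k), and the centralizer of all b_k is the group they generate.  Both
     rest on the same "germ" principle: a map commuting with f and fixing a point p to
     which f^-1 contracts everything is determined by its affine germ at p.
   The file develops dyadic arithmetic and integer powers; checks that all words in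
   x0, x1 lie in F, T and V (closure of piecewise affine maps under composition);
   proves the germ principle and derives the centralizer of x0 and the local form of
   maps commuting with b; studies the dynamics of a, which gives the wreath product
   structure and the centralizer of all b_k; and finally shows that phi defines <a,b>. *)

Lemma two_pow_pos : forall k, 0 < 2 ^ k.
Proof. intros; apply pow_lt; lra. Qed.

Lemma powerRZ2_pos : forall z, 0 < powerRZ 2 z.
Proof. intros; apply powerRZ_lt; lra. Qed.

Lemma two_pow_IZR : forall k, 2 ^ k = IZR (2 ^ Z.of_nat k).
Proof. intros; rewrite <- pow_IZR; reflexivity. Qed.

Lemma dyadic_IZR : forall m, dyadic (IZR m).
Proof. intros m; exists m, 0%nat; simpl; field. Qed.

Lemma dyadic_add : forall x y, dyadic x -> dyadic y -> dyadic (x + y).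
Proof.
  intros x y [m1 [k1 H1]] [m2 [k2 H2]]; subst.
  exists (m1 * 2 ^ Z.of_nat k2 + m2 * 2 ^ Z.of_nat k1)%Z, (k1 + k2)%nat.
  rewrite plus_IZR, !mult_IZR, <- !two_pow_IZR, pow_add.
  pose proof (two_pow_pos k1); pose proof (two_pow_pos k2). field; lra.
Qed.

Lemma dyadic_opp : forall x, dyadic x -> dyadic (- x).
Proof.
  intros x [m [k H]]; subst; exists (- m)%Z, k; rewrite opp_IZR.
  pose proof (two_pow_pos k); field; lra.
Qed.

Lemma dyadic_sub : forall x y, dyadic x -> dyadic y -> dyadic (x - y).
Proof. intros; unfold Rminus; apply dyadic_add, dyadic_opp; auto. Qed.

Lemma dyadic_mul : forall x y, dyadic x -> dyadic y -> dyadic (x * y).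
Proof.
  intros x y [m1 [k1 H1]] [m2 [k2 H2]]; subst.
  exists (m1 * m2)%Z, (k1 + k2)%nat. rewrite mult_IZR, pow_add.
  pose proof (two_pow_pos k1); pose proof (two_pow_pos k2). field; lra.
Qed.

Lemma dyadic_scale : forall z x, dyadic x -> dyadic (powerRZ 2 z * x).
Proof.
  intros z x [m [k H]]; subst. pose proof (two_pow_pos k). destruct z as [|p|p]; simpl.
  - exists m, k; ring.
  - exists (m * 2 ^ Z.of_nat (Pos.to_nat p))%Z, k.
    rewrite mult_IZR, <- two_pow_IZR. field; lra.
  - exists m, (k + Pos.to_nat p)%nat. rewrite pow_add.
    pose proof (two_pow_pos (Pos.to_nat p)). field; lra.
Qed.

Lemma dyadic_inv2 : dyadic (/ 2). Proof. exists 1%Z, 1%nat; simpl; field. Qed.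
Lemma dyadic_inv4 : dyadic (/ 4). Proof. exists 1%Z, 2%nat; simpl; field. Qed.
Lemma dyadic_inv8 : dyadic (/ 8). Proof. exists 1%Z, 3%nat; simpl; field. Qed.
Lemma dyadic_inv16 : dyadic (/ 16). Proof. exists 1%Z, 4%nat; simpl; field. Qed.

Ltac dyadic_tac :=
  unfold Rdiv; repeat first
    [ apply dyadic_IZR | apply dyadic_inv2 | apply dyadic_inv4 | apply dyadic_inv8
    | apply dyadic_inv16 | simple apply dyadic_add | simple apply dyadic_sub
    | simple apply dyadic_mul ].

(* [inv] is defined by choice; on bijections it is a two-sided inverse. *)
Definition bij (f : R -> R) := (forall x, inv f (f x) = x) /\ (forall y, f (inv f y) = y).

Lemma inv_spec : forall f y, (exists s, f s = y) -> f (inv f y) = y.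
Proof. intros f y H; unfold inv; apply (epsilon_spec (inhabits 0) (fun s => f s = y) H). Qed.

Lemma bij_intro : forall f g, (forall x, g (f x) = x) -> (forall y, f (g y) = y) -> bij f.
Proof.
  intros f g H1 H2; split.
  - intros x. assert (E : f (inv f (f x)) = f x) by (apply inv_spec; eauto).
    rewrite <- (H1 (inv f (f x))), E, H1; reflexivity.
  - intros y; apply inv_spec; eauto.
Qed.

Lemma inv_unique : forall f g, (forall x, g (f x) = x) -> (forall y, f (g y) = y) -> inv f = g.
Proof.
  intros f g H1 H2; apply functional_extensionality; intros y.
  assert (E : f (inv f y) = y) by (apply inv_spec; eauto).
  rewrite <- E at 2; rewrite H1; reflexivity.
Qed.

Lemma bij_inj : forall f s t, bij f -> f s = f t -> s = t.
Proof. intros f s t [H1 H2] E; rewrite <- (H1 s), E, H1; reflexivity. Qed.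

Lemma inv_one : inv one = one.
Proof. apply inv_unique; reflexivity. Qed.

Lemma bij_inv : forall f, bij f -> bij (inv f).
Proof. intros f [H1 H2]; apply (bij_intro (inv f) f); auto. Qed.

Lemma inv_inv : forall f, bij f -> inv (inv f) = f.
Proof. intros f [H1 H2]; apply inv_unique; auto. Qed.

Lemma bij_mul : forall f g, bij f -> bij g -> bij (mul f g).
Proof.
  intros f g [F1 F2] [G1 G2]; apply (bij_intro _ (mul (inv g) (inv f))); unfold mul; intros.
  - rewrite G1, F1; auto.
  - rewrite F2, G2; auto.
Qed.

Lemma inv_mul : forall f g, bij f -> bij g -> inv (mul f g) = mul (inv g) (inv f).
Proof.
  intros f g [F1 F2] [G1 G2]; apply inv_unique; unfold mul; intros.
  - rewrite G1, F1; auto.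
  - rewrite F2, G2; auto.
Qed.

Lemma npow_S : forall f n t, npow f (S n) t = f (npow f n t).
Proof. reflexivity. Qed.

Lemma npow_0 : forall f t, npow f 0 t = t.
Proof. reflexivity. Qed.

Lemma npow_add : forall f m n t, npow f (m + n) t = npow f n (npow f m t).
Proof.
  intros f m n t; induction n; simpl; [rewrite Nat.add_0_r; reflexivity|].
  rewrite Nat.add_succ_r, npow_S, IHn; reflexivity.
Qed.

Lemma zpow_nat : forall f n, zpow f (Z.of_nat n) = npow f n.
Proof. intros f [|n]; [reflexivity|]. simpl. rewrite SuccNat2Pos.id_succ. reflexivity. Qed.

Lemma zpow_negnat : forall f n, zpow f (- Z.of_nat n) = npow (inv f) n.
Proof. intros f [|n]; [reflexivity|]. simpl. rewrite SuccNat2Pos.id_succ. reflexivity. Qed.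

Lemma Z_cases : forall z, (exists n, z = Z.of_nat n) \/ (exists n, z = (- Z.of_nat (S n))%Z).
Proof.
  intros z. destruct (Z_le_gt_dec 0 z).
  - left; exists (Z.to_nat z); lia.
  - right; exists (Z.to_nat (- z) - 1)%nat; lia.
Qed.

Lemma npow_S' : forall f n t, npow f (S n) t = npow f n (f t).
Proof. intros f n; induction n; intros t; [reflexivity|]. rewrite npow_S, IHn; reflexivity. Qed.

Lemma npow_inv_cancel : forall f n t, bij f -> npow f n (npow (inv f) n t) = t.
Proof.
  intros f n; induction n; intros t Hf; [reflexivity|].
  rewrite npow_S', (npow_S (inv f)). destruct Hf as [H1 H2]. rewrite H2. apply IHn; split; auto.
Qed.

Lemma zpow_succ : forall f z t, bij f -> zpow f (Z.succ z) t = f (zpow f z t).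
Proof.
  intros f z t Hf. destruct (Z_cases z) as [[n ->]|[n ->]].
  - rewrite <- Nat2Z.inj_succ, !zpow_nat; reflexivity.
  - replace (Z.succ (- Z.of_nat (S n))) with (- Z.of_nat n)%Z by lia.
    rewrite !zpow_negnat, npow_S. destruct Hf as [H1 H2]; rewrite H2; reflexivity.
Qed.

Lemma zpow_pred : forall f z t, bij f -> zpow f (Z.pred z) t = inv f (zpow f z t).
Proof.
  intros f z t Hf. destruct (Z_cases z) as [[[|n] ->]|[n ->]].
  - reflexivity.
  - replace (Z.pred (Z.of_nat (S n))) with (Z.of_nat n) by lia.
    rewrite !zpow_nat, npow_S. destruct Hf as [H1 H2]; rewrite H1; reflexivity.
  - replace (Z.pred (- Z.of_nat (S n))) with (- Z.of_nat (S (S n)))%Z by lia.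
    rewrite !zpow_negnat, npow_S; reflexivity.
Qed.

Lemma zpow_add : forall f i j t, bij f -> zpow f (i + j) t = zpow f j (zpow f i t).
Proof.
  intros f i j t Hf. revert t. pattern j; apply Z.peano_ind; clear j.
  - intros; rewrite Z.add_0_r; reflexivity.
  - intros j IH t. rewrite Z.add_succ_r, !zpow_succ, IH; auto.
  - intros j IH t. rewrite Z.add_pred_r, !zpow_pred, IH; auto.
Qed.

Lemma zpow_0 : forall f t, zpow f 0 t = t.
Proof. reflexivity. Qed.

Lemma zpow_1 : forall f t, zpow f 1 t = f t.
Proof. reflexivity. Qed.

Lemma zpow_cancel : forall f i t, bij f -> zpow f (- i) (zpow f i t) = t.
Proof. intros. rewrite <- zpow_add, Z.add_opp_diag_r; auto. Qed.

Lemma zpow_cancel' : forall f i t, bij f -> zpow f i (zpow f (- i) t) = t.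
Proof. intros. rewrite <- zpow_add, Z.add_opp_diag_l; auto. Qed.

Lemma bij_zpow : forall f i, bij f -> bij (zpow f i).
Proof. intros f i Hf; apply (bij_intro _ (zpow f (- i))); intros; auto using zpow_cancel, zpow_cancel'. Qed.

Lemma inv_zpow : forall f i, bij f -> inv (zpow f i) = zpow f (- i).
Proof. intros f i Hf; apply inv_unique; intros; auto using zpow_cancel, zpow_cancel'. Qed.

Lemma zpow_mul_eq : forall f i j, bij f -> mul (zpow f i) (zpow f j) = zpow f (i + j).
Proof. intros; apply functional_extensionality; intros; unfold mul; rewrite zpow_add; auto. Qed.

Lemma zpow_zpow : forall f m j t, bij f -> zpow (zpow f m) j t = zpow f (m * j) t.
Proof.
  intros f m j t Hf. revert t. pattern j; apply Z.peano_ind; clear j.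
  - intros; rewrite Z.mul_0_r; reflexivity.
  - intros j IH t. rewrite zpow_succ, IH, Z.mul_succ_r, zpow_add; auto using bij_zpow.
  - intros j IH t. rewrite zpow_pred, IH, Z.mul_pred_r, inv_zpow by auto using bij_zpow.
    unfold Z.sub. rewrite zpow_add; auto.
Qed.

Lemma zpow_fix : forall f j t, bij f -> f t = t -> zpow f j t = t.
Proof.
  intros f j t Hf E. pattern j; apply Z.peano_ind.
  - reflexivity.
  - intros x IH; rewrite zpow_succ, IH; auto.
  - intros x IH; rewrite zpow_pred, IH; auto. rewrite <- E at 1. apply Hf.
Qed.

Lemma zpow_conj : forall C f m t, bij C -> bij f ->
  zpow (mul (mul (inv C) f) C) m t = C (zpow f m (inv C t)).
Proof.
  intros C f m t HC Hf.
  assert (Hg : bij (mul (mul (inv C) f) C)) by auto using bij_mul, bij_inv.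
  revert t. pattern m; apply Z.peano_ind; clear m.
  - intros t; rewrite !zpow_0. destruct HC as [_ H]; rewrite H; reflexivity.
  - intros m IH t. rewrite zpow_succ, IH by auto. unfold mul.
    rewrite zpow_succ by auto. destruct HC as [H1 H2]; rewrite H1; reflexivity.
  - intros m IH t. rewrite zpow_pred, IH by auto.
    rewrite inv_mul, inv_mul, inv_inv by auto using bij_mul, bij_inv. unfold mul.
    rewrite zpow_pred by auto. destruct HC as [H1 H2]; rewrite H1; reflexivity.
Qed.

Lemma zpow_comm : forall f g m t, bij f -> bij g -> (forall s, f (g s) = g (f s)) ->
  f (zpow g m t) = zpow g m (f t).
Proof.
  intros f g m t Hf Hg Hc. revert t. pattern m; apply Z.peano_ind; clear m.
  - reflexivity.
  - intros m IH t. rewrite !zpow_succ by auto. rewrite Hc, IH; reflexivity.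
  - intros m IH t. rewrite !zpow_pred by auto. rewrite <- IH.
    apply (bij_inj g); auto. destruct Hg as [G1 G2]. rewrite G2, <- Hc, G2; reflexivity.
Qed.

Lemma pow2_gt : forall x, exists n, x < 2 ^ n.
Proof.
  assert (INR_lt_pow2 : forall n, INR n < 2 ^ n).
  { induction n; [simpl; lra|]. rewrite S_INR. simpl pow.
    assert (1 <= 2 ^ n) by (apply pow_R1_Rle; lra). lra. }
  intros x. destruct (archimed x) as [H1 _].
  destruct (Z_le_gt_dec (up x) 0) as [L|L].
  - exists 0%nat; simpl. apply IZR_le in L. lra.
  - exists (Z.to_nat (up x)). pose proof (INR_lt_pow2 (Z.to_nat (up x))).
    rewrite INR_IZR_INZ, Z2Nat.id in H by lia. lra.
Qed.

Definition x0i (t : R) : R :=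
  if Rlt_dec t 0 then t
  else if Rlt_dec t (1/2) then t / 2
  else if Rlt_dec t (3/4) then t - 1/4
  else if Rlt_dec t 1 then 2 * t - 1
  else t.

Definition x1i (t : R) : R :=
  if Rlt_dec t 0 then t
  else if Rlt_dec t (1/2) then t
  else if Rlt_dec t (3/4) then t / 2 + 1/4
  else if Rlt_dec t (7/8) then t - 1/8
  else if Rlt_dec t 1 then 2 * t - 1
  else t.

Definition beta (t : R) : R :=
  if Rlt_dec t (1/2) then t
  else if Rlt_dec t (5/8) then 2 * t - 1/2
  else if Rlt_dec t (7/8) then t / 2 + 7/16
  else t.

Definition betai (t : R) : R :=
  if Rlt_dec t (1/2) then t
  else if Rlt_dec t (3/4) then t / 2 + 1/4
  else if Rlt_dec t (7/8) then 2 * t - 7/8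
  else t.

Ltac split_if H := repeat match type of H with context [Rlt_dec ?a ?b] =>
  destruct (Rlt_dec a b); try (exfalso; lra) end.
Ltac split_g := repeat match goal with |- context [Rlt_dec ?a ?b] =>
  destruct (Rlt_dec a b); try (exfalso; lra) end.
Ltac ev f x := let u := fresh "u" in let Hu := fresh "Hu" in
  remember (f x) as u eqn:Hu; unfold f in Hu; split_if Hu.

Lemma x0_x0i : forall t, x0 (x0i t) = t. Proof. intros t; ev x0i t; unfold x0; split_g; lra. Qed.
Lemma x0i_x0 : forall t, x0i (x0 t) = t. Proof. intros t; ev x0 t; unfold x0i; split_g; lra. Qed.
Lemma x1_x1i : forall t, x1 (x1i t) = t. Proof. intros t; ev x1i t; unfold x1; split_g; lra. Qed.
Lemma x1i_x1 : forall t, x1i (x1 t) = t. Proof. intros t; ev x1 t; unfold x1i; split_g; lra. Qed.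
Lemma beta_betai : forall t, beta (betai t) = t. Proof. intros t; ev betai t; unfold beta; split_g; lra. Qed.
Lemma betai_beta : forall t, betai (beta t) = t. Proof. intros t; ev beta t; unfold betai; split_g; lra. Qed.

Lemma bij_x0 : bij x0. Proof. exact (bij_intro _ _ x0i_x0 x0_x0i). Qed.
Lemma inv_x0 : inv x0 = x0i. Proof. exact (inv_unique _ _ x0i_x0 x0_x0i). Qed.
Lemma inv_x0i : inv x0i = x0. Proof. exact (inv_unique _ _ x0_x0i x0i_x0). Qed.
Lemma inv_x1 : inv x1 = x1i. Proof. exact (inv_unique _ _ x1i_x1 x1_x1i). Qed.
Lemma inv_x1i : inv x1i = x1. Proof. exact (inv_unique _ _ x1_x1i x1i_x1). Qed.

Lemma b_eq : b = beta.
Proof.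
  unfold b; rewrite inv_x0, inv_x1. apply functional_extensionality; intros t; unfold mul.
  ev x1 t; ev x0i u; ev x1i u0; ev x0 u1; unfold beta; split_g; lra.
Qed.

Lemma bij_b : bij b. Proof. rewrite b_eq; exact (bij_intro _ _ betai_beta beta_betai). Qed.
Lemma inv_b : inv b = betai. Proof. rewrite b_eq; exact (inv_unique _ _ betai_beta beta_betai). Qed.

Lemma not_in01 : forall t, ~ in01 t -> t < 0 \/ 1 <= t.
Proof. intros t H; unfold in01 in H; destruct (Rlt_dec t 0); [left|right]; lra. Qed.

Lemma Rabs_lip : forall f s t, (forall s t, s <= t -> f s <= f t) ->
  (forall s t, s <= t -> f t - f s <= 2 * (t - s)) -> Rabs (f s - f t) <= 2 * Rabs (s - t).
Proof.
  intros f s t M L. destruct (Rle_dec s t) as [H|H]; [|assert (H' : t <= s) by lra].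
  - pose proof (M s t H); pose proof (L s t H).
    rewrite (Rabs_left1 (s - t)), Rabs_left1 by lra. lra.
  - pose proof (M t s H'); pose proof (L t s H').
    rewrite (Rabs_right (s - t)), Rabs_right by lra. lra.
Qed.

Lemma Rmin_lt_cases : forall x y d, Rmin x y < d -> x < d \/ y < d.
Proof. intros x y d; unfold Rmin; destruct (Rle_dec x y); auto. Qed.

(* A nondecreasing 2-Lipschitz element of V fixing 0 and not too small near 1 is
   continuous on the circle: the estimate near 1 handles the wrap-around at 0. *)
Lemma Tel_of : forall f, Vel f -> (forall s t, s <= t -> f s <= f t) ->
  (forall s t, s <= t -> f t - f s <= 2 * (t - s)) -> f 0 = 0 ->
  (forall s, 3/4 <= s < 1 -> 2 * s - 1 <= f s) -> Tel f.
Proof.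
  intros f V M L F0 N1; split; auto. intros t Ht eps He.
  destruct V as [_ [V2 _]]. unfold circ_dist.
  destruct (Req_dec t 0) as [T0|T0].
  - subst t. exists (Rmin (eps / 4) (1/8)); split; [apply Rmin_glb_lt; lra|].
    intros s Hs D. pose proof (Rmin_l (eps/4) (1/8)); pose proof (Rmin_r (eps/4) (1/8)).
    pose proof (V2 s Hs) as Hfs. unfold in01 in *.
    rewrite Rminus_0_r, Rabs_right in D by lra.
    rewrite F0, Rminus_0_r, (Rabs_right (f s)) by lra.
    apply Rmin_lt_cases in D. destruct D as [D|D].
    + eapply Rle_lt_trans; [apply Rmin_l|]. pose proof (L 0 s (proj1 Hs)). lra.
    + eapply Rle_lt_trans; [apply Rmin_r|]. pose proof (N1 s). lra.
  - unfold in01 in Ht.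
    exists (Rmin (eps / 2) (Rmin (t/2) ((1 - t)/2))); split; [repeat apply Rmin_glb_lt; lra|].
    intros s Hs D. unfold in01 in Hs.
    pose proof (Rmin_l (eps/2) (Rmin (t/2) ((1 - t)/2))).
    pose proof (Rmin_r (eps/2) (Rmin (t/2) ((1 - t)/2))).
    pose proof (Rmin_l (t/2) ((1 - t)/2)); pose proof (Rmin_r (t/2) ((1 - t)/2)).
    assert (Near : Rabs (s - t) < Rmin (eps / 2) (Rmin (t / 2) ((1 - t) / 2))).
    { apply Rmin_lt_cases in D. destruct D as [D|D]; auto. exfalso. destruct (Rle_dec s t).
      - rewrite Rabs_left1 in D by lra. lra.
      - rewrite Rabs_right in D by lra. lra. }
    eapply Rle_lt_trans; [apply Rmin_l|]. pose proof (Rabs_lip f s t M L). lra.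
Qed.

Lemma VFT_of : forall f g,
  (forall t, t < 0 \/ 1 <= t -> f t = t) -> (forall t, 0 <= t < 1 -> 0 <= f t < 1) ->
  (forall s t, s < t -> f s < f t) -> (forall t, f (g t) = t) ->
  (forall t, 0 <= t < 1 -> 0 <= g t < 1) ->
  (forall s t, s <= t -> f t - f s <= 2 * (t - s)) -> f 0 = 0 ->
  (forall s, 3/4 <= s < 1 -> 2 * s - 1 <= f s) -> pw_affine_dyadic f ->
  Vel f /\ Fel f /\ Tel f.
Proof.
  intros f g Out In01 Incr Sect Gin Lip F0 N1 PW.
  assert (V : Vel f).
  { split; [intros t Ht; apply Out, not_in01; auto|split; [exact In01|split; [|split; [|exact PW]]]].
    - intros s t _ _ E. destruct (Rtotal_order s t) as [L|[L|L]]; auto;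
        apply Incr in L; lra.
    - intros u Hu; exists (g u); split; [apply Gin; exact Hu|apply Sect]. }
  assert (M : forall s t, s <= t -> f s <= f t).
  { intros s t [L|L]; [apply Rlt_le, Incr; auto|subst; lra]. }
  split; [exact V|split; [split; [exact V|]|apply Tel_of; auto]].
  intros t Ht eps He. exists (eps / 2); split; [lra|].
  intros s Hs D. pose proof (Rabs_lip f s t M Lip). lra.
Qed.

Ltac pieces := let i := fresh "i" in let Hi := fresh "Hi" in intros i Hi;
  repeat (destruct i as [|i]; [|try (exfalso; lia)]).
Ltac slope_tac f k := split; [unfold f; split_g; dyadic_tac
  | exists k; let t := fresh "t" in intros t ?; unfold f; split_g; simpl; lra].
Ltac breakpoints n p :=
  exists n, p; split; [lia|split; [reflexivity|split; [reflexivity|split; [|split]]]];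
  [pieces; simpl; dyadic_tac | pieces; simpl; lra | pieces; simpl].

Ltac VFT_tac f g :=
  apply (VFT_of f g);
  [ intros t Ht; unfold f; split_g; lra | intros t Ht; unfold f; split_g; lra
  | intros s t H; ev f s; ev f t; lra | idtac
  | intros t Ht; unfold g; split_g; lra | intros s t H; ev f s; ev f t; lra
  | unfold f; split_g; lra | intros s Hs; unfold f; split_g; lra | ].

Lemma x0_VFT : Vel x0 /\ Fel x0 /\ Tel x0.
Proof.
  VFT_tac x0 x0i; [exact x0_x0i|].
  breakpoints 3%nat (fun i => match i with 0 => 0 | 1 => 1/4 | 2 => 1/2 | _ => 1 end).
  - slope_tac x0 1%Z.
  - slope_tac x0 0%Z.
  - slope_tac x0 (-1)%Z.
Qed.

Lemma x0i_VFT : Vel x0i /\ Fel x0i /\ Tel x0i.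
Proof.
  VFT_tac x0i x0; [exact x0i_x0|].
  breakpoints 3%nat (fun i => match i with 0 => 0 | 1 => 1/2 | 2 => 3/4 | _ => 1 end).
  - slope_tac x0i (-1)%Z.
  - slope_tac x0i 0%Z.
  - slope_tac x0i 1%Z.
Qed.

Lemma x1_VFT : Vel x1 /\ Fel x1 /\ Tel x1.
Proof.
  VFT_tac x1 x1i; [exact x1_x1i|].
  breakpoints 4%nat (fun i => match i with 0 => 0 | 1 => 1/2 | 2 => 5/8 | 3 => 3/4 | _ => 1 end).
  - slope_tac x1 0%Z.
  - slope_tac x1 1%Z.
  - slope_tac x1 0%Z.
  - slope_tac x1 (-1)%Z.
Qed.

Lemma x1i_VFT : Vel x1i /\ Fel x1i /\ Tel x1i.
Proof.
  VFT_tac x1i x1; [exact x1i_x1|].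
  breakpoints 4%nat (fun i => match i with 0 => 0 | 1 => 1/2 | 2 => 3/4 | 3 => 7/8 | _ => 1 end).
  - slope_tac x1i 0%Z.
  - slope_tac x1i (-1)%Z.
  - slope_tac x1i 0%Z.
  - slope_tac x1i 1%Z.
Qed.

Lemma one_VFT : Vel one /\ Fel one /\ Tel one.
Proof.
  apply (VFT_of one one); unfold one; intros; try lra; auto.
  breakpoints 1%nat (fun i => match i with 0 => 0 | _ => 1 end).
  split; [dyadic_tac|exists 0%Z; intros; simpl; lra].
Qed.

(** * Closure of V, F and T under composition *)

(* To compose piecewise affine maps we describe them by an unordered list L of
   breakpoints; [piece L l t] says that t lies in the piece of [0,1) starting at l. *)
Definition piece (L : list R) (l t : R) : Prop :=
  l <= t < 1 /\ forall l', In l' L -> l < l' -> t < l'.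

Definition dyadic_breaks (f : R -> R) (L : list R) : Prop :=
  In 0 L /\ forall l, In l L -> dyadic l /\ 0 <= l < 1 /\ dyadic (f l) /\
    exists k, forall t, piece L l t -> f t = f l + powerRZ 2 k * (t - l).

Lemma pw_breaks : forall f, pw_affine_dyadic f -> exists L, dyadic_breaks f L.
Proof.
  intros f [n [p [Hn [H0 [Hnn [Hd [Hinc Hsl]]]]]]].
  assert (Mono : forall i j, (i < j)%nat -> (j <= n)%nat -> p i < p j).
  { intros i j Hij; induction Hij; intros Hj; [apply Hinc; lia|].
    eapply Rlt_trans; [apply IHHij; lia|apply Hinc; lia]. }
  assert (Rng : forall i, (i < n)%nat -> 0 <= p i < 1).
  { intros i Hi; split; [destruct i; [lra|]; rewrite <- H0; left; apply Mono; lia|].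
    rewrite <- Hnn; apply Mono; lia. }
  exists (map p (seq 0 n)). split; [rewrite <- H0; apply in_map, in_seq; lia|].
  intros l Hl. apply in_map_iff in Hl. destruct Hl as [i [<- Hi]]. apply in_seq in Hi.
  destruct (Hsl i ltac:(lia)) as [Hfd [k Hk]].
  split; [apply Hd; lia|split; [apply Rng; lia|split; [auto|]]].
  exists k. intros t [[T1 T2] T3]. apply Hk. split; auto.
  destruct (Nat.eq_dec (S i) n) as [E|E].
  - rewrite E, Hnn; auto.
  - apply T3; [apply in_map, in_seq; lia|apply Hinc; lia].
Qed.

Definition nxt (L : list R) (x : R) : R :=
  fold_right Rmin 1 (filter (fun l => if Rlt_dec x l then true else false) L).

Lemma fold_min_le1 : forall M, fold_right Rmin 1 M <= 1.
Proof. induction M; simpl; [lra|]. pose proof (Rmin_r a (fold_right Rmin 1 M)); lra. Qed.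

Lemma fold_min_lb : forall M m, In m M -> fold_right Rmin 1 M <= m.
Proof.
  induction M; simpl; intros m H; [contradiction|]. destruct H as [<-|H]; [apply Rmin_l|].
  pose proof (IHM m H); pose proof (Rmin_r a (fold_right Rmin 1 M)); lra.
Qed.

Lemma fold_min_in : forall M, fold_right Rmin 1 M = 1 \/ In (fold_right Rmin 1 M) M.
Proof.
  induction M; simpl; auto. destruct (Rle_dec a (fold_right Rmin 1 M)).
  - rewrite Rmin_left by auto. right; left; auto.
  - rewrite Rmin_right by lra. destruct IHM as [E|E]; [left|right; right]; auto.
Qed.

Lemma fold_min_gt : forall M x, x < 1 -> (forall m, In m M -> x < m) -> x < fold_right Rmin 1 M.
Proof.
  induction M; simpl; intros x H1 H2; auto. unfold Rmin at 1.
  destruct (Rle_dec a (fold_right Rmin 1 M)); auto.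
Qed.

Lemma nxt_in : forall L x, nxt L x = 1 \/ In (nxt L x) L.
Proof.
  intros L x; unfold nxt.
  destruct (fold_min_in (filter (fun l => if Rlt_dec x l then true else false) L)) as [E|E]; auto.
  right; apply filter_In in E; tauto.
Qed.

Lemma nxt_gt : forall L x, x < 1 -> x < nxt L x.
Proof.
  intros L x H; apply fold_min_gt; auto. intros m Hm; apply filter_In in Hm.
  destruct Hm as [_ Hm]. destruct (Rlt_dec x m); auto; discriminate.
Qed.

Lemma nxt_lb : forall L x l, In l L -> x < l -> nxt L x <= l.
Proof. intros L x l H1 H2; apply fold_min_lb, filter_In; split; auto. destruct (Rlt_dec x l); auto. Qed.

Lemma NoDup_incr : forall (p : nat -> R) m k,
  (forall i j, (k <= i)%nat -> (i < j)%nat -> (j < k + m)%nat -> p i < p j) ->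
  NoDup (map p (seq k m)).
Proof.
  intros p m; induction m; intros k H; simpl; constructor.
  - intros Hin. apply in_map_iff in Hin. destruct Hin as [j [E Hj]]. apply in_seq in Hj.
    assert (p k < p j) by (apply H; lia). lra.
  - apply IHm. intros i j Hi Hij Hj; apply H; lia.
Qed.

Lemma nxt_iter_reaches_one : forall L, In 0 L -> exists n,
  Nat.iter n (nxt L) 0 = 1 /\ forall j, (j < n)%nat -> Nat.iter j (nxt L) 0 < 1.
Proof.
  intros L H0. set (p := fun i => Nat.iter i (nxt L) 0).
  assert (PS : forall i, p (S i) = nxt L (p i)) by reflexivity.
  assert (P2 : forall i, p i <= 1) by (intros [|i]; [simpl; lra|rewrite PS; apply fold_min_le1]).
  assert (Hit : exists i, p i = 1).
  { apply NNPP; intros C.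
    assert (Lt : forall i, p i < 1) by (intros i; destruct (P2 i); eauto; exfalso; eauto).
    assert (Inc : forall i j, (i < j)%nat -> p i < p j).
    { intros i j Hij; induction Hij; rewrite PS; [apply nxt_gt; auto|].
      eapply Rlt_trans; [apply IHHij|apply nxt_gt; auto]. }
    assert (ND : NoDup (map p (seq 0 (S (length L))))) by (apply NoDup_incr; auto).
    assert (IC : incl (map p (seq 0 (S (length L)))) L).
    { intros x Hx. apply in_map_iff in Hx. destruct Hx as [[|i] [<- _]]; [|rewrite PS].
      - exact H0.
      - destruct (nxt_in L (p i)) as [E|E]; auto. rewrite <- PS in E. specialize (Lt (S i)); lra. }
    pose proof (NoDup_incl_length ND IC). rewrite length_map, length_seq in H. lia. }
  destruct Hit as [i Hi]. revert Hi. induction i as [i IH] using (well_founded_induction lt_wf).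
  intros Hi. destruct (classic (exists j, (j < i)%nat /\ p j = 1)) as [[j [Hj1 Hj2]]|N].
  - apply (IH j Hj1 Hj2).
  - exists i; split; auto. intros j Hj. destruct (P2 j); auto. exfalso; apply N; eauto.
Qed.

Lemma breaks_pw : forall f L, dyadic_breaks f L -> pw_affine_dyadic f.
Proof.
  intros f L [H0 HL].
  destruct (nxt_iter_reaches_one L H0) as [n [Hn Hlt]].
  set (p := fun i => Nat.iter i (nxt L) 0).
  change (p n = 1) in Hn. change (forall j, (j < n)%nat -> p j < 1) in Hlt.
  assert (PS : forall i, p (S i) = nxt L (p i)) by reflexivity.
  assert (InL : forall i, (i < n)%nat -> In (p i) L).
  { intros [|i] Hi; [exact H0|]. rewrite PS. destruct (nxt_in L (p i)) as [E|E]; auto.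
    rewrite <- PS in E. specialize (Hlt (S i) Hi). lra. }
  exists n, p. split; [destruct n; [simpl in Hn; lra|lia]|].
  split; [reflexivity|split; [exact Hn|split; [|split]]].
  - intros i Hi. destruct (Nat.eq_dec i n) as [->|Ne]; [rewrite Hn; apply dyadic_IZR|].
    apply HL, InL; lia.
  - intros i Hi. rewrite PS. apply nxt_gt, Hlt; auto.
  - intros i Hi. destruct (HL (p i) (InL i Hi)) as [_ [_ [Hfd [k Hk]]]].
    split; auto. exists k. intros t [T1 T2]. apply Hk. split.
    + split; auto. assert (p (S i) <= 1) by (rewrite PS; apply fold_min_le1). lra.
    + intros l' Hl' Hlt'. rewrite PS in T2. pose proof (nxt_lb L (p i) l' Hl' Hlt'); lra.
Qed.

Lemma floor_ex : forall L t, In 0 L -> 0 <= t < 1 -> exists l, In l L /\ piece L l t.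
Proof.
  assert (maxle : forall (L : list R) t, (exists x, In x L /\ x <= t) ->
    exists l, In l L /\ l <= t /\ forall l', In l' L -> l' <= t -> l' <= l).
  { induction L as [|a L IH]; intros t [x [Hx Ht]]; [contradiction|].
    destruct (classic (exists y, In y L /\ y <= t)) as [E|E].
    - destruct (IH t E) as [l [Hl1 [Hl2 Hl3]]].
      destruct (Rle_dec a t) as [Ha|Ha]; [destruct (Rle_dec a l)|].
      + exists l; split; [right; auto|split; auto]. intros l' [<-|H'] H''; auto.
      + exists a; split; [left; auto|split; auto].
        intros l' [<-|H'] H''; [lra|]. specialize (Hl3 l' H' H''); lra.
      + exists l; split; [right; auto|split; auto]. intros l' [<-|H'] H''; [lra|auto].
    - destruct Hx as [Hx|Hx]; [subst a|exfalso; apply E; eauto].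
      exists x; split; [left; auto|split; auto].
      intros l' [<-|H'] H''; [lra|exfalso; apply E; eauto]. }
  intros L t H0 Ht. destruct (maxle L t) as [l [Hl1 [Hl2 Hl3]]]; [exists 0; split; auto; lra|].
  exists l; split; auto. split; [lra|]. intros l' Hl' Hlt. destruct (Rlt_dec t l'); auto.
  specialize (Hl3 l' Hl' ltac:(lra)); lra.
Qed.

Lemma Vel_bij : forall f, Vel f -> bij f.
Proof.
  intros f [H1 [H2 [H3 [H4 _]]]].
  assert (Inj : forall s t, f s = f t -> s = t).
  { intros s t E. destruct (classic (in01 s)) as [Hs|Hs]; destruct (classic (in01 t)) as [Ht|Ht].
    - apply H3; auto.
    - rewrite (H1 t Ht) in E. exfalso; apply Ht; rewrite <- E; auto.
    - rewrite (H1 s Hs) in E. exfalso; apply Hs; rewrite E; auto.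
    - rewrite (H1 s Hs), (H1 t Ht) in E; auto. }
  assert (Sur : forall y, f (inv f y) = y).
  { intros y; apply inv_spec. destruct (classic (in01 y)) as [Hy|Hy].
    - destruct (H4 y Hy) as [t [_ Ht]]; eauto.
    - exists y; apply H1; auto. }
  split; [intros x; apply Inj; auto|auto].
Qed.

Lemma Vel_inv_in01 : forall f y, Vel f -> in01 y -> in01 (inv f y).
Proof.
  intros f y V Hy. pose proof (Vel_bij f V) as [_ B2].
  destruct (classic (in01 (inv f y))) as [H|H]; auto.
  destruct V as [H1 _]. rewrite <- (B2 y), (H1 _ H) in Hy. auto.
Qed.

Lemma piece_image : forall f Lg m0 l t c, 0 < c -> l <= t ->
  (forall s, l <= s <= t -> f s = f l + c * (s - l)) -> f t < 1 ->
  piece Lg m0 (f l) -> (forall s, l < s <= t -> ~ In (f s) Lg) -> piece Lg m0 (f t).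
Proof.
  intros f Lg m0 l t c Hc Hlt Aff Ht1 [[A1 A2] A3] NoBreak.
  assert (Ft : f t = f l + c * (t - l)) by (apply Aff; lra).
  assert (f l <= f t) by (rewrite Ft; assert (0 <= c * (t - l)) by (apply Rmult_le_pos; lra); lra).
  split; [lra|]. intros m Hm Hlt'. destruct (Rlt_dec (f t) m) as [X|X]; auto. exfalso.
  specialize (A3 m Hm Hlt').
  set (s := l + / c * (m - f l)).
  assert (Sl : l < s) by (unfold s; assert (0 < / c * (m - f l))
    by (apply Rmult_lt_0_compat; [apply Rinv_0_lt_compat|]; lra); lra).
  assert (St : s <= t).
  { unfold s. apply Rplus_le_reg_l with (- l). apply Rmult_le_reg_l with c; auto.
    field_simplify; lra. }
  apply (NoBreak s); [lra|]. rewrite Aff by lra. unfold s. replace (f l + c * (l + / c * (m - f l) - l)) with m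
    by (field; lra). exact Hm.
Qed.

Lemma piece_sub : forall L L' l0 l t, incl L L' -> piece L l0 l -> piece L' l t -> piece L l0 t.
Proof.
  intros L L' l0 l t Inc [[A1 A2] A3] [[C1 C2] C3]. split; [lra|].
  intros l'' H1 H2. apply C3; [apply Inc; auto|]. apply A3; auto.
Qed.

Lemma breaks_mul_affine : forall f g Lf Lg, Vel f -> dyadic_breaks f Lf -> dyadic_breaks g Lg ->
  forall l, In l (Lf ++ map (inv f) Lg) -> 0 <= l < 1 -> exists k, forall t,
    piece (Lf ++ map (inv f) Lg) l t -> mul f g t = mul f g l + powerRZ 2 k * (t - l).
Proof.
  intros f g Lf Lg Vf [F0 HF] [G0 HG] l Hl Hr.
  pose proof (Vel_bij f Vf) as [B1 _]. pose proof Vf as [_ [Vf2 _]].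
  assert (IncF : incl Lf (Lf ++ map (inv f) Lg)) by (intros x Hx; apply in_or_app; auto).
  destruct (floor_ex Lf l F0 Hr) as [l0 [Hl0 Pl0]].
  destruct (HF l0 Hl0) as [_ [_ [_ [k1 K1]]]].
  destruct (floor_ex Lg (f l) G0 (Vf2 l Hr)) as [m0 [Hm0 Pm0]].
  destruct (HG m0 Hm0) as [_ [_ [_ [k2 K2]]]].
  exists (k1 + k2)%Z. intros t Pt. unfold mul.
  pose proof (powerRZ2_pos k1) as Pk1.
  assert (Aff : forall s, l <= s <= t -> f s = f l + powerRZ 2 k1 * (s - l)).
  { intros s Hs. assert (Ps : piece Lf l0 s).
    { apply (piece_sub Lf (Lf ++ map (inv f) Lg) l0 l s IncF Pl0).
      destruct Pt as [[C1 C2] C3]. split; [lra|]. intros l' H1 H2; specialize (C3 l' H1 H2); lra. }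
    rewrite (K1 s Ps), (K1 l Pl0); ring. }
  assert (Pft : piece Lg m0 (f t)).
  { destruct Pt as [[C1 C2] C3].
    apply (piece_image f Lg m0 l t (powerRZ 2 k1)); auto; [apply Vf2; unfold in01; lra|].
    intros s Hs Hin. assert (Ins : In s (Lf ++ map (inv f) Lg)).
    { apply in_or_app; right. rewrite <- (B1 s). apply in_map; auto. }
    specialize (C3 s Ins ltac:(lra)). lra. }
  rewrite (K2 (f t) Pft), (K2 (f l) Pm0), (Aff t), powerRZ_add by (destruct Pt as [[? ?] _]; lra).
  ring.
Qed.

Lemma breaks_mul : forall f g Lf Lg, Vel f -> dyadic_breaks f Lf -> dyadic_breaks g Lg ->
  dyadic_breaks (mul f g) (Lf ++ map (inv f) Lg).
Proof.
  intros f g Lf Lg Vf Bf Bg. pose proof Bf as [F0 HF]. pose proof Bg as [G0 HG].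
  pose proof (Vel_bij f Vf) as [_ B2]. pose proof Vf as [_ [Vf2 _]].
  split; [apply in_or_app; auto|].
  intros l Hl. pose proof (breaks_mul_affine f g Lf Lg Vf Bf Bg l Hl) as Aff.
  apply in_app_or in Hl. destruct Hl as [Hl|Hl].
  - destruct (HF l Hl) as [D1 [D2 [D3 _]]]. split; [exact D1|split; [exact D2|split; [|auto]]].
    unfold mul. destruct (floor_ex Lg (f l) G0 (Vf2 l D2)) as [m0 [Hm0 Pm0]].
    destruct (HG m0 Hm0) as [E1 [_ [E3 [k2 K2]]]].
    rewrite (K2 _ Pm0). apply dyadic_add, dyadic_scale, dyadic_sub; auto.
  - apply in_map_iff in Hl. destruct Hl as [m [<- Hm]].
    destruct (HG m Hm) as [E1 [E2 [E3 _]]].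
    assert (Hr : in01 (inv f m)) by (apply Vel_inv_in01; auto).
    split; [|split; [exact Hr|split; [unfold mul; rewrite B2; auto|auto]]].
    destruct (floor_ex Lf (inv f m) F0 Hr) as [l0 [Hl0 Pl0]].
    destruct (HF l0 Hl0) as [D1 [_ [D3 [k1 K1]]]].
    pose proof (K1 _ Pl0) as Q. rewrite B2 in Q. pose proof (powerRZ2_pos k1).
    replace (inv f m) with (l0 + powerRZ 2 (- k1) * (m - f l0)).
    + apply dyadic_add, dyadic_scale, dyadic_sub; auto.
    + assert (E : m - f l0 = powerRZ 2 k1 * (inv f m - l0)) by (rewrite Q at 1; ring).
      rewrite powerRZ_neg', E. field. lra.
Qed.

Lemma Vel_mul : forall f g, Vel f -> Vel g -> Vel (mul f g).
Proof.
  intros f g Vf Vg.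
  assert (PW : pw_affine_dyadic (mul f g)).
  { pose proof Vf as [_ [_ [_ [_ Pf]]]]; pose proof Vg as [_ [_ [_ [_ Pg]]]].
    destruct (pw_breaks f Pf) as [Lf Gf]; destruct (pw_breaks g Pg) as [Lg Gg].
    eapply breaks_pw, breaks_mul; eauto. }
  destruct Vf as [F1 [F2 [F3 [F4 _]]]]; destruct Vg as [G1 [G2 [G3 [G4 _]]]].
  unfold mul; split; [|split; [|split; [|split]]]; auto.
  - intros t Ht; rewrite F1, G1; auto.
  - intros u Hu. destruct (G4 u Hu) as [v [Hv1 Hv2]]. destruct (F4 v Hv1) as [w [Hw1 Hw2]].
    exists w; split; auto; rewrite Hw2; auto.
Qed.

Lemma Fel_mul : forall f g, Fel f -> Fel g -> Fel (mul f g).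
Proof.
  intros f g [Vf Cf] [Vg Cg]; split; [apply Vel_mul; auto|].
  intros t Ht eps He. pose proof Vf as [_ [F2 _]].
  destruct (Cg (f t) (F2 t Ht) eps He) as [d1 [Hd1 D1]].
  destruct (Cf t Ht d1 Hd1) as [d [Hd D]].
  exists d; split; auto. intros s Hs Hst. unfold mul. apply D1; auto.
Qed.

Lemma Tel_mul : forall f g, Tel f -> Tel g -> Tel (mul f g).
Proof.
  intros f g [Vf Cf] [Vg Cg]; split; [apply Vel_mul; auto|].
  intros t Ht eps He. pose proof Vf as [_ [F2 _]].
  destruct (Cg (f t) (F2 t Ht) eps He) as [d1 [Hd1 D1]].
  destruct (Cf t Ht d1 Hd1) as [d [Hd D]].
  exists d; split; auto. intros s Hs Hst. unfold mul. apply D1; auto.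
Qed.

Inductive gen01 : (R -> R) -> Prop :=
| gen01_x0 : gen01 x0
| gen01_x0i : gen01 x0i
| gen01_x1 : gen01 x1
| gen01_x1i : gen01 x1i
| gen01_one : gen01 one
| gen01_mul : forall f g, gen01 f -> gen01 g -> gen01 (mul f g).

Lemma gen01_VFT : forall f, gen01 f -> Vel f /\ Fel f /\ Tel f.
Proof.
  intros f G; induction G; auto using x0_VFT, x0i_VFT, x1_VFT, x1i_VFT, one_VFT.
  destruct IHG1 as [A1 [B1 C1]]; destruct IHG2 as [A2 [B2 C2]].
  auto using Vel_mul, Fel_mul, Tel_mul.
Qed.

Lemma gen01_V : forall f, gen01 f -> Vel f. Proof. intros f G; apply gen01_VFT; auto. Qed.
Lemma gen01_F : forall f, gen01 f -> Fel f. Proof. intros f G; apply gen01_VFT; auto. Qed.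
Lemma gen01_T : forall f, gen01 f -> Tel f. Proof. intros f G; apply gen01_VFT; auto. Qed.
Lemma gen01_bij : forall f, gen01 f -> bij f. Proof. intros f G; apply Vel_bij, gen01_V; auto. Qed.

Lemma gen01_inv : forall f, gen01 f -> gen01 (inv f).
Proof.
  intros f G; induction G.
  - rewrite inv_x0; constructor.
  - rewrite inv_x0i; constructor.
  - rewrite inv_x1; constructor.
  - rewrite inv_x1i; constructor.
  - rewrite inv_one; constructor.
  - rewrite inv_mul by (apply gen01_bij; auto). constructor; auto.
Qed.

Lemma gen01_zpow : forall f j, gen01 f -> gen01 (zpow f j).
Proof.
  assert (Hn : forall f n, gen01 f -> gen01 (npow f n)).
  { intros f n G; induction n; [constructor|]. change (gen01 (mul (npow f n) f)); constructor; auto. }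
  intros f j G. destruct j; simpl; [constructor|apply Hn; auto|apply Hn, gen01_inv; auto].
Qed.

Lemma gen01_a : gen01 a. Proof. unfold a; constructor; constructor. Qed.
Lemma gen01_b : gen01 b. Proof. unfold b; rewrite inv_x0, inv_x1; repeat constructor. Qed.
Lemma gen01_bk : forall k, gen01 (bk k).
Proof. intros; unfold bk; constructor; [constructor|]; auto using gen01_zpow, gen01_a, gen01_b. Qed.

Lemma bij_a : bij a. Proof. apply gen01_bij, gen01_a. Qed.
Lemma bij_bk : forall k, bij (bk k). Proof. intros; apply gen01_bij, gen01_bk. Qed.

Lemma gen2_zpow : forall f j, gen2 a b f -> gen2 a b (zpow f j).
Proof.
  assert (Hn : forall f n, gen2 a b f -> gen2 a b (npow f n)).
  { intros f n G; induction n; [constructor|]. change (gen2 a b (mul (npow f n) f)); constructor; auto. }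
  intros f j G. destruct j; simpl; [constructor|apply Hn; auto|apply Hn; constructor; auto].
Qed.

Lemma gen2_bk : forall k, gen2 a b (bk k).
Proof.
  intros; unfold bk. apply gen2_mul; [apply gen2_mul|]; auto using gen2_zpow, gen2_l, gen2_r.
Qed.

(** * The germ principle *)

Lemma right_germ : forall f x, Vel f -> 0 <= x < 1 -> exists eps, 0 < eps /\ exists e,
  forall t, x <= t < x + eps -> f t = f x + powerRZ 2 e * (t - x).
Proof.
  intros f x [_ [_ [_ [_ [n [p [Hn [H0 [Hnn [Hd [Hinc Hsl]]]]]]]]]]] Hx.
  assert (Ex : forall m, (m <= n)%nat -> x < p m -> exists i, (i < m)%nat /\ p i <= x < p (S i)).
  { induction m; intros Hm Hlt; [lra|].
    destruct (Rle_dec (p m) x); [exists m; split; [lia|lra]|].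
    destruct (IHm ltac:(lia) ltac:(lra)) as [i [Hi1 Hi2]]. exists i; split; [lia|auto]. }
  destruct (Ex n (le_n n) ltac:(lra)) as [i [Hi [Hi1 Hi2]]].
  destruct (Hsl i Hi) as [_ [e He]].
  exists (p (S i) - x); split; [lra|]. exists e. intros t Ht.
  rewrite (He t), (He x) by lra. ring.
Qed.

(* Let h commute with f and fix p, and let the powers of f^-1 push t into every
   right neighbourhood of p.  If h and f^e have the same affine germ at p, then
   h t = f^e t: indeed t = f^n s with s near p, and h t = f^n (h s) = f^n (f^e s). *)
Lemma germ_principle : forall f h p e eps d, bij f -> bij h ->
  (forall t, f (h t) = h (f t)) -> h p = p -> 0 < eps -> 0 < d ->
  (forall s, p <= s < p + eps -> h s = p + powerRZ 2 e * (s - p)) ->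
  (forall s, p <= s < p + d -> zpow f e s = p + powerRZ 2 e * (s - p)) ->
  forall t, (forall r, 0 < r -> exists n, p <= npow (inv f) n t < p + r) -> h t = zpow f e t.
Proof.
  intros f h p e eps d Bf Bh C Hp He Hd Hgerm Fgerm t Esc.
  destruct (Esc (Rmin eps d)) as [n Hn]; [apply Rmin_glb_lt; auto|].
  pose proof (Rmin_l eps d); pose proof (Rmin_r eps d).
  set (s := npow (inv f) n t) in *.
  assert (Ts : t = zpow f (Z.of_nat n) s) by (rewrite zpow_nat; symmetry; apply npow_inv_cancel, Bf).
  rewrite Ts, (zpow_comm h f) by (auto; intros; symmetry; apply C).
  rewrite (Hgerm s), <- (Fgerm s) by lra.
  rewrite <- !zpow_add, Z.add_comm by auto. reflexivity.
Qed.

(** * The centralizer of x0 in V is <x0> *)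

Lemma x0_out : forall t, ~ in01 t -> x0 t = t.
Proof. intros t H; apply not_in01 in H; unfold x0; split_g; lra. Qed.

Lemma x0_0 : x0 0 = 0. Proof. unfold x0; split_g; lra. Qed.

Lemma x0_pow_germ : forall j, exists d, 0 < d /\
  forall s, 0 <= s < 0 + d -> zpow x0 j s = 0 + powerRZ 2 j * (s - 0).
Proof.
  assert (Pos : forall n s, 0 <= s -> 2 ^ n * s < 1/4 -> npow x0 n s = 2 ^ n * s).
  { induction n; intros s H1 H2; [rewrite npow_0; simpl; lra|].
    assert (0 <= 2 ^ n * s) by (apply Rmult_le_pos; auto; left; apply two_pow_pos).
    rewrite npow_S. simpl pow in *. rewrite IHn by lra.
    unfold x0; split_g; lra. }
  assert (Neg : forall n s, 0 <= s < 1/2 -> npow x0i n s = s / 2 ^ n).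
  { induction n; intros s H; [rewrite npow_0; simpl; field|]. rewrite npow_S, IHn by auto. simpl pow.
    pose proof (two_pow_pos n). assert (1 <= 2 ^ n) by (apply pow_R1_Rle; lra).
    assert (s / 2 ^ n <= s) by (apply Rmult_le_reg_r with (2 ^ n); [lra|]; field_simplify; nra).
    assert (0 <= s / 2 ^ n) by (apply Rmult_le_pos; [lra|left; apply Rinv_0_lt_compat; lra]).
    unfold x0i; split_g; field; lra. }
  intros j. destruct (Z_cases j) as [[n ->]|[n ->]].
  - pose proof (two_pow_pos n). exists (/ 4 / 2 ^ n). split; [apply Rdiv_lt_0_compat; lra|].
    intros s Hs. rewrite zpow_nat, <- pow_powerRZ, Pos; [ring|lra|].
    destruct Hs as [_ Hs]. apply Rmult_lt_compat_l with (r := 2 ^ n) in Hs; auto.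
    replace (2 ^ n * (0 + / 4 / 2 ^ n)) with (1/4) in Hs by (field; lra). exact Hs.
  - exists (1/2); split; [lra|]. intros s Hs. rewrite zpow_negnat, inv_x0, Neg by lra.
    rewrite powerRZ_neg', <- pow_powerRZ. pose proof (two_pow_pos (S n)). field; lra.
Qed.

Lemma x0i_contracts : forall t, 0 <= t < 1 -> forall r, 0 < r ->
  exists n, 0 <= npow (inv x0) n t < 0 + r.
Proof.
  assert (Iter : forall n t, 0 <= t < 1 ->
    0 <= npow x0i n t < 1 /\ Rmin (2 ^ n * (1 - t)) (1/2) <= 1 - npow x0i n t).
  { induction n; intros t H; simpl pow.
    - rewrite npow_0. split; [lra|]. unfold Rmin; destruct Rle_dec; lra.
    - rewrite npow_S. destruct (IHn t H) as [A B]. set (v := npow x0i n t) in *.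
      assert (Rmin (2 * (1 - v)) (1/2) <= 1 - x0i v)
        by (unfold Rmin; destruct Rle_dec; unfold x0i; split_g; lra).
      split; [unfold x0i; split_g; lra|].
      revert B H0. replace (2 * 2 ^ n * (1 - t)) with (2 * (2 ^ n * (1 - t))) by ring.
      unfold Rmin. repeat destruct Rle_dec; intros; lra. }
  assert (Half : forall n u, 0 <= u <= 1/2 -> 0 <= npow x0i n u <= u / 2 ^ n).
  { induction n; intros u H; simpl pow; [rewrite npow_0; split; [lra|]; right; field|].
    rewrite npow_S.
    destruct (IHn u H) as [A B]. pose proof (two_pow_pos n).
    assert (1 <= 2 ^ n) by (apply pow_R1_Rle; lra).
    assert (u / 2 ^ n <= u) by (apply Rmult_le_reg_r with (2 ^ n); [lra|]; field_simplify; nra).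
    replace (u / (2 * 2 ^ n)) with ((u / 2 ^ n) / 2) by (field; lra).
    set (v := npow x0i n u) in *. set (w := u / 2 ^ n) in *. unfold x0i; split_g; lra. }
  intros t Ht r Hr. rewrite inv_x0.
  destruct (pow2_gt (/ (2 * (1 - t)))) as [n1 Hn1]. destruct (pow2_gt (/ r)) as [n2 Hn2].
  destruct (Iter n1 t Ht) as [A B].
  assert (U : npow x0i n1 t <= 1/2).
  { assert (1/2 <= 2 ^ n1 * (1 - t)).
    { apply Rmult_lt_compat_r with (r := 2 * (1 - t)) in Hn1; [|lra].
      rewrite Rinv_l in Hn1 by lra. lra. }
    revert B; unfold Rmin; destruct Rle_dec; intros; lra. }
  exists (n1 + n2)%nat. rewrite npow_add. destruct (Half n2 (npow x0i n1 t)) as [C D]; [lra|].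
  pose proof (two_pow_pos n2).
  assert (npow x0i n1 t / 2 ^ n2 <= 1 / 2 ^ n2)
    by (apply Rmult_le_compat_r; [left; apply Rinv_0_lt_compat|]; lra).
  assert (1 / 2 ^ n2 < r).
  { apply Rmult_lt_reg_r with (2 ^ n2); auto. field_simplify; [|lra].
    apply Rmult_lt_compat_l with (r := r) in Hn2; auto. rewrite Rinv_r in Hn2 by lra. lra. }
  lra.
Qed.

Theorem centralizer_x0 : forall y, Vel y -> mul y x0 = mul x0 y -> exists j, y = zpow x0 j.
Proof.
  intros y Vy Hc.
  assert (C : forall t, x0 (y t) = y (x0 t)) by (intros t; exact (f_equal (fun F => F t) Hc)).
  assert (Y0 : y 0 = 0).
  { assert (R0 : in01 (y 0)) by (destruct Vy as [_ [V2 _]]; apply V2; unfold in01; lra).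
    pose proof (C 0) as E. rewrite x0_0 in E. revert E R0; unfold x0, in01; split_g; lra. }
  destruct (right_germ y 0 Vy ltac:(lra)) as [eps [He [e Ye]]].
  destruct (x0_pow_germ e) as [d [Hd Xd]].
  exists e. apply functional_extensionality; intros t.
  destruct (classic (in01 t)) as [Ht|Ht].
  - apply (germ_principle x0 y 0 e eps d); auto using bij_x0, Vel_bij.
    + intros s Hs. rewrite Ye, Y0 by lra. ring.
    + apply x0i_contracts; auto.
  - destruct Vy as [V1 _]. rewrite V1 by auto. symmetry; apply zpow_fix; [apply bij_x0|apply x0_out; auto].
Qed.

(** * Maps commuting with b *)

Definition bsupp (t : R) : Prop := 1/2 < t < 7/8.

Lemma beta_out : forall t, ~ bsupp t -> beta t = t.
Proof. intros t H; unfold bsupp in H; unfold beta; split_g; try lra; exfalso; apply H; lra. Qed.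

Lemma beta_in : forall t, bsupp t -> bsupp (beta t) /\ t < beta t.
Proof. unfold bsupp; intros t H; unfold beta; split_g; lra. Qed.

Lemma betai_in : forall t, bsupp t -> bsupp (betai t) /\ betai t < t.
Proof. unfold bsupp; intros t H; unfold betai; split_g; lra. Qed.

Lemma b_pow_out : forall m t, ~ bsupp t -> zpow b m t = t.
Proof. intros; apply zpow_fix; [apply bij_b|rewrite b_eq; apply beta_out; auto]. Qed.

(* b moves every point of its support strictly upwards, so no nontrivial power of b
   has a fixed point there. *)
Lemma b_pow_in : forall m t, bsupp t -> bsupp (zpow b m t) /\ (m <> 0%Z -> zpow b m t <> t).
Proof.
  assert (Pos : forall n t, bsupp t -> bsupp (npow beta n t) /\ (n <> 0%nat -> t < npow beta n t)).
  { induction n; intros t H; [split; [auto|intros C; lia]|].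
    rewrite npow_S. destruct n as [|n]; [destruct (beta_in t H); split; auto|].
    destruct (IHn t H) as [A B]. destruct (beta_in _ A) as [C D].
    split; auto. intros _. specialize (B ltac:(lia)). lra. }
  assert (Neg : forall n t, bsupp t -> bsupp (npow betai n t) /\ (n <> 0%nat -> npow betai n t < t)).
  { induction n; intros t H; [split; [auto|intros C; lia]|].
    rewrite npow_S. destruct n as [|n]; [destruct (betai_in t H); split; auto|].
    destruct (IHn t H) as [A B]. destruct (betai_in _ A) as [C D].
    split; auto. intros _. specialize (B ltac:(lia)). lra. }
  intros m t H. destruct (Z_cases m) as [[n ->]|[n ->]].
  - rewrite zpow_nat, b_eq. destruct (Pos n t H) as [A C]. split; auto.
    intros Hm. assert (n <> 0%nat) by (intro; subst; apply Hm; reflexivity).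
    specialize (C H0); lra.
  - rewrite zpow_negnat, inv_b. destruct (Neg (S n) t H) as [A C]. split; auto.
    intros _. specialize (C ltac:(lia)); lra.
Qed.

Lemma betai_pow_near : forall n s, 1/2 <= s < 3/4 -> npow betai n s = 1/2 + (s - 1/2) / 2 ^ n.
Proof.
  induction n; intros s H; [rewrite npow_0; simpl pow; field|]. rewrite npow_S, IHn by auto.
  simpl pow. pose proof (two_pow_pos n). assert (1 <= 2 ^ n) by (apply pow_R1_Rle; lra).
  assert (0 <= (s - 1/2) / 2 ^ n) by (apply Rmult_le_pos; [lra|left; apply Rinv_0_lt_compat; lra]).
  assert ((s - 1/2) / 2 ^ n <= s - 1/2)
    by (apply Rmult_le_reg_r with (2 ^ n); [lra|]; field_simplify; nra).
  replace ((s - 1/2) / (2 * 2 ^ n)) with (((s - 1/2) / 2 ^ n) / 2) by (field; lra).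
  set (w := (s - 1/2) / 2 ^ n) in *. unfold betai; split_g; lra.
Qed.

Lemma b_pow_germ : forall m, exists d, 0 < d /\
  forall s, 1/2 <= s < 1/2 + d -> zpow b m s = 1/2 + powerRZ 2 m * (s - 1/2).
Proof.
  assert (Pos : forall n s, 1/2 <= s -> 2 ^ n * (s - 1/2) < 1/8 ->
    npow beta n s = 1/2 + 2 ^ n * (s - 1/2)).
  { induction n; intros s H1 H2; [rewrite npow_0; simpl pow; lra|].
    assert (0 <= 2 ^ n * (s - 1/2)) by (apply Rmult_le_pos; [left; apply two_pow_pos|lra]).
    rewrite npow_S. simpl pow in *. rewrite IHn by lra.
    replace (2 * 2 ^ n * (s - 1/2)) with (2 * (2 ^ n * (s - 1/2))) in * by ring.
    set (w := 2 ^ n * (s - 1/2)) in *. unfold beta; split_g; lra. }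
  intros m. destruct (Z_cases m) as [[n ->]|[n ->]].
  - pose proof (two_pow_pos n). exists (/ 8 / 2 ^ n). split; [apply Rdiv_lt_0_compat; lra|].
    intros s Hs. rewrite zpow_nat, b_eq, <- pow_powerRZ. apply Pos; [lra|].
    destruct Hs as [_ Hs]. apply Rplus_lt_compat_r with (r := - (1/2)) in Hs.
    apply Rmult_lt_compat_l with (r := 2 ^ n) in Hs; auto.
    replace (2 ^ n * (1/2 + / 8 / 2 ^ n + - (1/2))) with (1/8) in Hs by (field; lra). lra.
  - exists (1/4); split; [lra|]. intros s Hs. rewrite zpow_negnat, inv_b, betai_pow_near by lra.
    rewrite powerRZ_neg', <- pow_powerRZ. pose proof (two_pow_pos (S n)). field; lra.
Qed.

Lemma binv_contracts : forall t, bsupp t -> forall r, 0 < r ->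
  exists n, 1/2 <= npow (inv b) n t < 1/2 + r.
Proof.
  assert (Iter : forall n t, bsupp t ->
    bsupp (npow betai n t) /\ Rmin (2 ^ n * (7/8 - t)) (1/4) <= 7/8 - npow betai n t).
  { induction n; intros t H.
    - rewrite npow_0; simpl pow. split; auto. unfold Rmin; destruct Rle_dec; unfold bsupp in H; lra.
    - rewrite npow_S; simpl pow. destruct (IHn t H) as [A B]. set (v := npow betai n t) in *.
      assert (Rmin (2 * (7/8 - v)) (1/4) <= 7/8 - betai v)
        by (unfold bsupp in A; unfold Rmin; destruct Rle_dec; unfold betai; split_g; lra).
      split; [apply betai_in; auto|].
      revert B H0. replace (2 * 2 ^ n * (7/8 - t)) with (2 * (2 ^ n * (7/8 - t))) by ring.
      unfold Rmin. repeat destruct Rle_dec; intros; lra. }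
  intros t Ht r Hr. rewrite inv_b.
  destruct (pow2_gt (/ (4 * (7/8 - t)))) as [n1 Hn1]. destruct (pow2_gt (/ r)) as [n2 Hn2].
  destruct (Iter n1 t Ht) as [A B].
  assert (U : npow betai n1 t <= 5/8).
  { unfold bsupp in Ht. assert (1/4 <= 2 ^ n1 * (7/8 - t)).
    { apply Rmult_lt_compat_r with (r := 4 * (7/8 - t)) in Hn1; [|lra].
      rewrite Rinv_l in Hn1 by lra. lra. }
    revert B; unfold Rmin; destruct Rle_dec; intros; lra. }
  unfold bsupp in A.
  exists (n1 + n2)%nat. rewrite npow_add.
  rewrite betai_pow_near by lra. pose proof (two_pow_pos n2).
  assert ((npow betai n1 t - 1/2) / 2 ^ n2 <= (1/8) / 2 ^ n2)
    by (apply Rmult_le_compat_r; [left; apply Rinv_0_lt_compat|]; lra).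
  assert (0 <= (npow betai n1 t - 1/2) / 2 ^ n2)
    by (apply Rmult_le_pos; [lra|left; apply Rinv_0_lt_compat; lra]).
  assert ((1/8) / 2 ^ n2 < r).
  { apply Rmult_lt_reg_r with (2 ^ n2); auto. field_simplify; [|lra].
    apply Rmult_lt_compat_l with (r := r) in Hn2; auto. rewrite Rinv_r in Hn2 by lra. lra. }
  lra.
Qed.

Lemma comm_b_preserves_supp : forall h, bij h -> (forall t, b (h t) = h (b t)) ->
  forall t, bsupp t -> bsupp (h t).
Proof.
  intros h Bh C t Ht. apply NNPP; intros N. rewrite b_eq in C.
  assert (E : h (beta t) = h t) by (rewrite <- C, beta_out; auto).
  apply (bij_inj h) in E; auto. destruct (beta_in t Ht); lra.
Qed.

(* h (1/2) is fixed by b, hence outside the support; but points just to the right of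
   1/2 are mapped into the support, so by the affine germ h (1/2) = 1/2. *)
Lemma comm_b_fixes_half : forall h, Vel h -> (forall t, b (h t) = h (b t)) -> h (1/2) = 1/2.
Proof.
  intros h Vh C.
  assert (Out : ~ bsupp (h (1/2))).
  { intros N. rewrite b_eq in C. destruct (beta_in _ N) as [_ D].
    rewrite C, beta_out in D; [lra|unfold bsupp; lra]. }
  destruct (right_germ h (1/2) Vh ltac:(lra)) as [eps [He [e Hgerm]]].
  pose proof (powerRZ2_pos e) as Pe.
  set (c := h (1/2)) in *. unfold bsupp in Out.
  assert (Near : forall d, 0 < d -> d < eps -> d < 3/8 -> 1/2 < c + powerRZ 2 e * d < 7/8).
  { intros d D1 D2 D3. replace (c + powerRZ 2 e * d) with (h (1/2 + d)).
    - apply (comm_b_preserves_supp h (Vel_bij h Vh) C). unfold bsupp; lra.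
    - rewrite Hgerm by lra. unfold c. ring. }
  destruct (Rlt_dec c (1/2)) as [L|L].
  - exfalso. set (q := (1/2 - c) / (2 * powerRZ 2 e)).
    assert (Q : 0 < q) by (apply Rdiv_lt_0_compat; lra).
    assert (Small : powerRZ 2 e * Rmin (eps / 2) (Rmin (1/8) q) <= (1/2 - c) / 2).
    { replace ((1/2 - c) / 2) with (powerRZ 2 e * q) by (unfold q; field; lra).
      apply Rmult_le_compat_l; [lra|]. eapply Rle_trans; apply Rmin_r. }
    pose proof (Rmin_l (eps / 2) (Rmin (1/8) q)). pose proof (Rmin_r (eps / 2) (Rmin (1/8) q)).
    pose proof (Rmin_l (1/8) q).
    destruct (Near (Rmin (eps / 2) (Rmin (1/8) q))); [repeat apply Rmin_glb_lt; lra|lra|lra|lra].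
  - destruct (Near (Rmin (eps / 2) (1/8))) as [_ N2].
    + apply Rmin_glb_lt; lra.
    + pose proof (Rmin_l (eps / 2) (1/8)); lra.
    + pose proof (Rmin_r (eps / 2) (1/8)); lra.
    + assert (0 < powerRZ 2 e * Rmin (eps / 2) (1/8)) by (apply Rmult_lt_0_compat; [lra|apply Rmin_glb_lt; lra]).
      lra.
Qed.

Theorem centralizer_b_local : forall h, Vel h -> (forall t, b (h t) = h (b t)) ->
  h (1/2) = 1/2 /\ exists m, forall t, bsupp t -> h t = zpow b m t.
Proof.
  intros h Vh C. pose proof (comm_b_fixes_half h Vh C) as H12. split; auto.
  destruct (right_germ h (1/2) Vh ltac:(lra)) as [eps [He [e Hgerm]]].
  destruct (b_pow_germ e) as [d [Hd Bd]].
  exists e. intros t Ht.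
  apply (germ_principle b h (1/2) e eps d); auto using bij_b, Vel_bij.
  - intros s Hs. rewrite Hgerm, H12 by lra. reflexivity.
  - apply binv_contracts; auto.
Qed.

(** * Dynamics of a = x0^2 *)

Lemma x0_incr : forall s t, s < t -> x0 s < x0 t. Proof. intros s t H; ev x0 s; ev x0 t; lra. Qed.
Lemma x0i_incr : forall s t, s < t -> x0i s < x0i t. Proof. intros s t H; ev x0i s; ev x0i t; lra. Qed.
Lemma x0_ge : forall t, t <= x0 t. Proof. intros t; unfold x0; split_g; lra. Qed.
Lemma x0i_le : forall t, x0i t <= t. Proof. intros t; unfold x0i; split_g; lra. Qed.
Lemma x0_in01 : forall t, in01 t -> in01 (x0 t). Proof. unfold in01; intros t H; unfold x0; split_g; lra. Qed.
Lemma x0i_in01 : forall t, in01 t -> in01 (x0i t). Proof. unfold in01; intros t H; unfold x0i; split_g; lra. Qed.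

Lemma ainv_eq : forall t, inv a t = x0i (x0i t).
Proof. intros t; unfold a; rewrite inv_mul by apply bij_x0. rewrite inv_x0; reflexivity. Qed.

Lemma a_incr : forall s t, s < t -> a s < a t. Proof. intros; apply x0_incr, x0_incr; auto. Qed.
Lemma ainv_incr : forall s t, s < t -> inv a s < inv a t.
Proof. intros; rewrite !ainv_eq; apply x0i_incr, x0i_incr; auto. Qed.
Lemma a_ge : forall t, t <= a t. Proof. intros; pose proof (x0_ge t); pose proof (x0_ge (x0 t)); unfold a, mul; lra. Qed.
Lemma ainv_le : forall t, inv a t <= t.
Proof. intros; rewrite ainv_eq. pose proof (x0i_le t); pose proof (x0i_le (x0i t)); lra. Qed.
Lemma a_half : a (1/2) = 7/8. Proof. unfold a, mul; ev x0 (1/2); ev x0 u; lra. Qed.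
Lemma ainv_78 : inv a (7/8) = 1/2. Proof. rewrite ainv_eq; ev x0i (7/8); ev x0i u; lra. Qed.

Definition A (j : Z) := zpow a j.

Lemma gen01_A : forall j, gen01 (A j). Proof. intros; apply gen01_zpow, gen01_a. Qed.
Lemma bij_A : forall j, bij (A j). Proof. intros; apply bij_zpow, bij_a. Qed.

Lemma A_incr : forall j s t, s < t -> A j s < A j t.
Proof.
  intros j; unfold A; pattern j; apply Z.peano_ind.
  - intros s t H; exact H.
  - intros x IH s t H. rewrite !zpow_succ by apply bij_a. apply a_incr; auto.
  - intros x IH s t H. rewrite !zpow_pred by apply bij_a. apply ainv_incr; auto.
Qed.

Lemma A_0 : forall j, A j 0 = 0.
Proof. intros; apply zpow_fix; [apply bij_a|unfold a, mul; rewrite x0_0, x0_0; reflexivity]. Qed.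

Lemma A_out : forall j t, ~ in01 t -> A j t = t.
Proof. intros j t H; apply zpow_fix; [apply bij_a|unfold a, mul; rewrite (x0_out t H), (x0_out t H); auto]. Qed.

Lemma A_in01 : forall j t, in01 t -> in01 (A j t).
Proof.
  intros j; unfold A; pattern j; apply Z.peano_ind.
  - intros t H; exact H.
  - intros x IH t H. rewrite zpow_succ by apply bij_a. apply x0_in01, x0_in01; auto.
  - intros x IH t H. rewrite zpow_pred by apply bij_a. rewrite ainv_eq; apply x0i_in01, x0i_in01; auto.
Qed.

Lemma A_add : forall i j t, A (i + j) t = A j (A i t). Proof. intros; apply zpow_add, bij_a. Qed.
Lemma A_cancel : forall j t, A (- j) (A j t) = t. Proof. intros; apply zpow_cancel, bij_a. Qed.
Lemma A_cancel' : forall j t, A j (A (- j) t) = t. Proof. intros; apply zpow_cancel', bij_a. Qed.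
Lemma A_inj : forall j s t, A j s = A j t -> s = t.
Proof. intros j s t E; rewrite <- (A_cancel j s), E, A_cancel; auto. Qed.

(* [1/2, 7/8) is a fundamental domain for the action of a on (0,1): since
   a (1/2) = 7/8, its translates A_j [1/2, 7/8) are disjoint and cover (0,1). *)
Definition fdom (s : R) : Prop := 1/2 <= s < 7/8.

Lemma fdom_disjoint : forall j s, fdom s -> j <> 0%Z -> ~ fdom (A j s).
Proof.
  intros j s [H1 H2] Hj N. destruct (Z_cases j) as [[[|n] ->]|[n ->]].
  - apply Hj; reflexivity.
  - unfold A in N; rewrite zpow_nat in N.
    assert (G : forall m, a s <= npow a (S m) s).
    { induction m; [rewrite npow_S, npow_0; lra|].
      rewrite (npow_S a (S m)). pose proof (a_ge (npow a (S m) s)); lra. }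
    pose proof (G n). assert (a (1/2) <= a s) by (destruct H1 as [H1|H1]; [left; apply a_incr; auto|subst; lra]).
    rewrite a_half in H0. destruct N; lra.
  - unfold A in N; rewrite zpow_negnat in N.
    assert (G : forall m, npow (inv a) (S m) s <= inv a s).
    { induction m; [rewrite npow_S, npow_0; lra|].
      rewrite (npow_S (inv a) (S m)). pose proof (ainv_le (npow (inv a) (S m) s)); lra. }
    pose proof (G n). pose proof (ainv_incr _ _ H2). rewrite ainv_78 in H0. destruct N; lra.
Qed.

Lemma fdom_unique : forall k l t, fdom (A (- k) t) -> fdom (A (- l) t) -> k = l.
Proof.
  intros k l t Hk Hl. destruct (Z.eq_dec (k - l) 0) as [E|E]; [lia|].
  exfalso. apply (fdom_disjoint (k - l) _ Hk E). rewrite <- A_add.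
  replace (- k + (k - l))%Z with (- l)%Z by lia. auto.
Qed.

Lemma a_escape : forall t, 0 < t < 1 -> exists n, 1/2 <= npow a n t.
Proof.
  intros t Ht.
  assert (G : forall n, 0 <= npow a n t < 1 /\ Rmin (2 ^ n * t) (1/2) <= npow a n t).
  { induction n.
    - rewrite npow_0; simpl pow. split; [lra|]. unfold Rmin; destruct Rle_dec; lra.
    - rewrite npow_S; simpl pow. destruct IHn as [A1 A2].
      set (v := npow a n t) in *.
      assert (B1 : Rmin (2 * v) (1/2) <= x0 v) by (unfold Rmin; destruct Rle_dec; unfold x0; split_g; lra).
      pose proof (x0_ge (x0 v)). pose proof (x0_in01 v A1). pose proof (x0_in01 _ H0).
      unfold a, mul. unfold in01 in *. split; [lra|].
      revert A2 B1. replace (2 * 2 ^ n * t) with (2 * (2 ^ n * t)) by ring.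
      unfold Rmin. repeat destruct Rle_dec; intros; lra. }
  destruct (pow2_gt (/ (2 * t))) as [n Hn]. exists n. destruct (G n) as [_ G2].
  assert (1/2 <= 2 ^ n * t).
  { apply Rmult_lt_compat_r with (r := 2 * t) in Hn; [|lra]. rewrite Rinv_l in Hn by lra. lra. }
  revert G2; unfold Rmin; destruct Rle_dec; intros; lra.
Qed.

Lemma ainv_escape : forall t, 0 <= t < 1 -> exists n, npow (inv a) n t < 7/8.
Proof.
  intros t Ht. destruct (x0i_contracts t Ht (1/2)) as [n Hn]; [lra|].
  exists n. rewrite inv_x0 in Hn.
  assert (G : forall m u, in01 u -> npow (inv a) m u <= npow x0i m u).
  { induction m; intros u Hu; [rewrite !npow_0; lra|]. rewrite !npow_S, ainv_eq.
    assert (in01 (npow x0i m u)).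
    { clear IHm. induction m; [exact Hu|rewrite npow_S; apply x0i_in01; auto]. }
    specialize (IHm u Hu). pose proof (x0i_le (x0i (npow (inv a) m u))).
    destruct (Rle_lt_or_eq_dec _ _ IHm) as [L|E]; [|rewrite E; apply x0i_le].
    pose proof (x0i_incr _ _ L). lra. }
  pose proof (G n t Ht). lra.
Qed.

Lemma Z_search : forall (P : Z -> Prop) k0 (d : nat), ~ P k0 -> P (k0 + Z.of_nat d)%Z ->
  exists k, P k /\ ~ P (k - 1)%Z.
Proof.
  intros P k0 d; induction d; intros N H.
  - rewrite Z.add_0_r in H; contradiction.
  - destruct (classic (P (k0 + Z.of_nat d)%Z)) as [E|E]; auto.
    exists (k0 + Z.of_nat (S d))%Z; split; auto.
    replace (k0 + Z.of_nat (S d) - 1)%Z with (k0 + Z.of_nat d)%Z by lia; auto.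
Qed.

Lemma fdom_covers : forall t, 0 < t < 1 -> exists k, fdom (A (- k) t).
Proof.
  intros t Ht. destruct (a_escape t Ht) as [n2 H2]. destruct (ainv_escape t ltac:(lra)) as [n1 H1].
  set (P := fun k => A (- k) t < 7/8).
  assert (P1 : P (Z.of_nat n1)) by (unfold P, A; rewrite zpow_negnat; auto).
  assert (P2 : ~ P (- Z.of_nat (S n2))%Z).
  { unfold P, A. rewrite Z.opp_involutive, zpow_nat, npow_S.
    assert (a (1/2) <= a (npow a n2 t))
      by (destruct H2 as [H2|H2]; [left; apply a_incr; auto|rewrite <- H2; lra]).
    rewrite a_half in H; lra. }
  destruct (Z_search P (- Z.of_nat (S n2)) (n1 + S n2) P2) as [k [K1 K2]].
  { replace (- Z.of_nat (S n2) + Z.of_nat (n1 + S n2))%Z with (Z.of_nat n1) by lia; auto. }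
  exists k. unfold P, fdom in *. split; [|auto].
  assert (E : A (- k) t = inv a (A (- (k - 1)) t)).
  { unfold A; rewrite <- (zpow_pred a) by apply bij_a. f_equal; lia. }
  rewrite E. assert (7/8 <= A (- (k - 1)) t) by lra.
  destruct H as [H|H]; [left; rewrite <- ainv_78; apply ainv_incr; auto|rewrite <- H, ainv_78; lra].
Qed.

(** * The conjugates b_k have disjoint supports: <a,b> = <b> wr <a> *)

Definition bksupp (k : Z) (t : R) : Prop := bsupp (A (- k) t).

Lemma bk_pow_eq : forall k m t, zpow (bk k) m t = A k (zpow b m (A (- k) t)).
Proof.
  intros k m t. unfold bk, A. rewrite <- (inv_zpow a k bij_a).
  apply zpow_conj; [apply bij_zpow, bij_a|apply bij_b].
Qed.

Lemma bksupp_unique : forall k l t, bksupp k t -> bksupp l t -> k = l.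
Proof. intros k l t H1 H2; apply (fdom_unique k l t); unfold fdom; unfold bksupp, bsupp in *; lra. Qed.

Lemma bksupp_iff : forall k t, bksupp k t <-> A k (1/2) < t < A k (7/8).
Proof.
  intros k t; unfold bksupp, bsupp; split; intros [H1 H2].
  - apply (A_incr k) in H1; apply (A_incr k) in H2. rewrite A_cancel' in H1, H2. lra.
  - apply (A_incr (- k)) in H1; apply (A_incr (- k)) in H2. rewrite A_cancel in H1, H2. lra.
Qed.

Lemma bk_pow_out : forall k m t, ~ bksupp k t -> zpow (bk k) m t = t.
Proof. intros k m t H. rewrite bk_pow_eq, b_pow_out by auto. apply A_cancel'. Qed.

Lemma bk_pow_in : forall k m t, bksupp k t -> bksupp k (zpow (bk k) m t).
Proof. intros k m t H. unfold bksupp. rewrite bk_pow_eq, A_cancel. apply b_pow_in; auto. Qed.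

Lemma bk_pow_moves : forall k m t, bksupp k t -> m <> 0%Z -> zpow (bk k) m t <> t.
Proof.
  intros k m t H Hm E. rewrite bk_pow_eq in E. rewrite <- (A_cancel' k t) in E at 2.
  apply A_inj in E. destruct (b_pow_in m _ H) as [_ C]. apply C; auto.
Qed.

Theorem bk_comm : forall k l, mul (bk k) (bk l) = mul (bk l) (bk k).
Proof.
  intros k l. apply functional_extensionality; intros t; unfold mul.
  destruct (Z.eq_dec k l) as [->|Hkl]; [reflexivity|].
  rewrite <- !(zpow_1 (bk k)), <- !(zpow_1 (bk l)).
  destruct (classic (bksupp k t)) as [Hk|Hk].
  - assert (Hl : ~ bksupp l t) by (intros Hl; apply Hkl; eapply bksupp_unique; eauto).
    rewrite (bk_pow_out l 1 t Hl). apply bk_pow_out. intros Hl'.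
    apply Hkl. eapply bksupp_unique; [apply (bk_pow_in k 1 t Hk)|eauto].
  - rewrite (bk_pow_out k 1 t Hk). destruct (classic (bksupp l t)) as [Hl|Hl].
    + symmetry; apply bk_pow_out. intros Hk'. apply Hkl. eapply bksupp_unique; [eauto|apply (bk_pow_in l 1 t Hl)].
    + rewrite (bk_pow_out l 1 t Hl), (bk_pow_out k 1 t Hk); reflexivity.
Qed.

Definition prodl (F : Z -> R -> R) (L : list Z) : R -> R := fold_right mul one (map F L).

Lemma prodl_cons : forall F k L t, prodl F (k :: L) t = prodl F L (F k t). Proof. reflexivity. Qed.

Lemma prodl_out : forall n L t, (forall k, In k L -> ~ bksupp k t) ->
  prodl (fun k => zpow (bk k) (n k)) L t = t.
Proof.
  intros n L; induction L as [|l L IH]; intros t H; [reflexivity|]. rewrite prodl_cons.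
  rewrite bk_pow_out by (apply H; left; auto). apply IH; intros; apply H; right; auto.
Qed.

Lemma prodl_notin : forall n L k t, bksupp k t -> ~ In k L ->
  prodl (fun k => zpow (bk k) (n k)) L t = t.
Proof. intros n L k t H N; apply prodl_out. intros l Hl Hl'. apply N. rewrite (bksupp_unique k l t H Hl'); auto. Qed.

Lemma prodl_in : forall n L k t, NoDup L -> bksupp k t -> In k L ->
  prodl (fun k => zpow (bk k) (n k)) L t = zpow (bk k) (n k) t.
Proof.
  intros n L; induction L as [|l L IH]; intros k t ND H Hin; [contradiction|]. rewrite prodl_cons.
  inversion ND; subst. destruct Hin as [<-|Hin].
  - apply (prodl_notin n L l); auto using bk_pow_in.
  - assert (l <> k) by (intros E; subst; contradiction).
    rewrite bk_pow_out by (intros Hl; apply H0; eapply bksupp_unique; eauto). apply IH; auto.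
Qed.

Lemma zrange_In : forall N k, In k (zrange N) <-> (- Z.of_nat N <= k <= Z.of_nat N)%Z.
Proof.
  intros N k; unfold zrange; rewrite in_map_iff; split.
  - intros [i [<- Hi]]. apply in_seq in Hi. lia.
  - intros H. exists (Z.to_nat (k + Z.of_nat N)). split; [lia|]. apply in_seq; lia.
Qed.

Lemma zrange_NoDup : forall N, NoDup (zrange N).
Proof. intros N; unfold zrange. apply NoDup_map_NoDup_ForallPairs; [|apply seq_NoDup]. intros x y _ _ E; lia. Qed.

Lemma half_not_bksupp : forall k, ~ bksupp k (1/2).
Proof.
  intros k H. assert (k = 0%Z).
  { apply (fdom_unique k 0 (1/2)); unfold fdom; [unfold bksupp, bsupp in H; lra|].
    unfold A; rewrite Z.opp_0, zpow_0; lra. }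
  subst. unfold bksupp, bsupp, A in H. rewrite Z.opp_0, zpow_0 in H. lra.
Qed.

(* Evaluating at 1/2 (outside all supports) kills the power of a; evaluating at a
   point of the support of b_k isolates the factor b_k^(n k). *)
Theorem freeness : forall (N : nat) (n : Z -> Z) (m : Z),
  mul (zprod N (fun k => zpow (bk k) (n k))) (zpow a m) = one ->
  m = 0%Z /\ forall k, (- Z.of_nat N <= k <= Z.of_nat N)%Z -> n k = 0%Z.
Proof.
  intros N n m E.
  assert (P : forall t, A m (prodl (fun k => zpow (bk k) (n k)) (zrange N) t) = t)
    by (intros t; exact (f_equal (fun G => G t) E)).
  assert (Hm : m = 0%Z).
  { specialize (P (1/2)). rewrite prodl_out in P by (intros; apply half_not_bksupp).
    destruct (Z.eq_dec m 0) as [|Hm]; auto. exfalso.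
    apply (fdom_disjoint m (1/2)); auto; [unfold fdom; lra|]. rewrite P. unfold fdom; lra. }
  split; auto. subst m. intros k Hk.
  destruct (Z.eq_dec (n k) 0) as [|Hn]; auto. exfalso.
  assert (It : bksupp k (A k (5/8))) by (unfold bksupp; rewrite A_cancel; unfold bsupp; lra).
  specialize (P (A k (5/8))). unfold A at 1 in P. rewrite zpow_0 in P.
  rewrite (prodl_in n (zrange N) k) in P by (auto using zrange_NoDup; apply zrange_In; auto).
  apply (bk_pow_moves k (n k) _ It Hn P).
Qed.

(** * The centralizer of all b_k in V is the group they generate *)

Definition comm_all_bk (h : R -> R) := forall k t, bk k (h t) = h (bk k t).

(* Conjugating by a^k reduces commutation with b_k to commutation with b. *)
Lemma comm_bk_local : forall h k, Vel h -> (forall t, bk k (h t) = h (bk k t)) ->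
  h (A k (1/2)) = A k (1/2) /\ exists m, forall t, bksupp k t -> h t = zpow (bk k) m t.
Proof.
  intros h k Vh Ck. set (hk := mul (mul (A k) h) (A (- k))).
  assert (Vk : Vel hk) by (apply Vel_mul; [apply Vel_mul|]; auto using gen01_V, gen01_A).
  assert (Cb : forall t, b (hk t) = hk (b t)).
  { intros t. unfold hk, mul. specialize (Ck (A k t)).
    rewrite <- !(zpow_1 (bk k)), !bk_pow_eq, A_cancel in Ck. rewrite !zpow_1 in Ck.
    apply (f_equal (A (- k))) in Ck. rewrite A_cancel in Ck. exact Ck. }
  destruct (centralizer_b_local hk Vk Cb) as [H1 [m Hm]]. split.
  - unfold hk, mul in H1. apply (f_equal (A k)) in H1. rewrite A_cancel' in H1. exact H1.
  - exists m. intros t Ht. specialize (Hm _ Ht). unfold hk, mul in Hm. rewrite A_cancel' in Hm.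
    rewrite bk_pow_eq, <- Hm, A_cancel'. reflexivity.
Qed.

(* 0 is fixed: otherwise h 0 lies in some A_k [1/2, 7/8), either inside the support of
   b_k (which h 0 = h (b_k 0) forbids) or at its fixed left endpoint. *)
Lemma comm_all_bk_fixes_0 : forall h, Vel h -> comm_all_bk h -> h 0 = 0.
Proof.
  intros h Vh Ck. pose proof (Vel_bij h Vh) as Bh.
  assert (R0 : 0 <= h 0 < 1) by (destruct Vh as [_ [V2 _]]; apply V2; unfold in01; lra).
  destruct (Req_dec (h 0) 0) as [|N]; auto. exfalso.
  destruct (fdom_covers (h 0) ltac:(lra)) as [k [[K1|K1] K2]].
  - assert (Ik : bksupp k (h 0)) by (unfold bksupp, bsupp; lra).
    assert (E : bk k (h 0) = h 0).
    { rewrite Ck, <- (zpow_1 (bk k)), bk_pow_eq, A_0, b_pow_out, A_0 by (unfold bsupp; lra).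
      reflexivity. }
    rewrite <- zpow_1 in E. apply (bk_pow_moves k 1 (h 0)); auto. lia.
  - destruct (comm_bk_local h k Vh (Ck k)) as [L _]. rewrite K1, A_cancel' in L.
    apply (bij_inj h) in L; auto.
Qed.

Lemma finitely_many_bksupp : forall L : list R, exists N,
  forall t k, In t L -> bksupp k t -> (Z.abs k <= Z.of_nat N)%Z.
Proof.
  induction L as [|x L [N HN]]; [exists 0%nat; intros t k []|].
  destruct (classic (exists k, bksupp k x)) as [[k0 Hk0]|NE].
  - exists (N + Z.to_nat (Z.abs k0))%nat. intros t k [<-|Ht] Hk.
    + rewrite (bksupp_unique k k0 x); auto. lia.
    + specialize (HN t k Ht Hk). lia.
  - exists N. intros t k [<-|Ht] Hk; [exfalso; eauto|eauto].
Qed.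

Lemma affine_self_map_id : forall h q r c, q < r -> 0 < c ->
  (forall s, q <= s < r -> h s = q + c * (s - q)) ->
  (forall s, q < s < r -> q < h s < r) ->
  (forall u, q < u < r -> exists s, q < s < r /\ h s = u) ->
  forall s, q < s < r -> h s = s.
Proof.
  intros h q r c Hqr Hc Aff Into Onto.
  assert (Hc1 : c = 1).
  { destruct (Rtotal_order c 1) as [L|[L|L]]; auto; exfalso.
    - set (u := q + (r - q) * (1 + c) / 2).
      assert (Hu : q < u < r) by (unfold u; split; nra).
      destruct (Onto u Hu) as [s [Hs E]]. rewrite Aff in E by lra.
      assert (c * (s - q) < c * (r - q)) by (apply Rmult_lt_compat_l; lra).
      unfold u in E. nra.
    - set (t0 := q + (r - q) / c).
      assert (T0 : q < t0 < r).
      { unfold t0. split.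
        - assert (0 < (r - q) / c) by (apply Rdiv_lt_0_compat; lra). lra.
        - assert ((r - q) / c < r - q)
            by (apply Rmult_lt_reg_r with c; [lra|]; field_simplify; [nra|lra]). lra. }
      destruct (Into t0 T0) as [_ X]. rewrite Aff in X by lra.
      unfold t0 in X. replace (q + c * (q + (r - q) / c - q)) with r in X by (field; lra). lra. }
  intros s Hs. rewrite Aff by lra. rewrite Hc1; ring.
Qed.

(* h is the identity on the supports of all but finitely many b_k: far out, the
   support of b_k contains no breakpoint of h, so h is affine there, fixes the left
   endpoint and maps the support onto itself. *)
Lemma comm_all_bk_finite_support : forall h, Vel h -> comm_all_bk h ->
  exists N, forall k, (Z.of_nat N < Z.abs k)%Z -> forall t, bksupp k t -> h t = t.
Proof.
  intros h Vh Ck. pose proof Vh as [_ [_ [_ [_ [n [p [Hn [H0 [Hnn [Hd [Hinc Hsl]]]]]]]]]]].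
  destruct (finitely_many_bksupp (map p (seq 0 (S n)))) as [N HN].
  exists N. intros k Hk.
  destruct (comm_bk_local h k Vh (Ck k)) as [Hq [m Hm]].
  set (q := A k (1/2)) in *. set (r := A k (7/8)).
  assert (Hqr : q < r) by (apply A_incr; lra).
  assert (Rq : 0 <= q < 1) by (apply (A_in01 k); unfold in01; lra).
  assert (Ex : forall j, (j <= n)%nat -> q < p j -> exists i, (i < j)%nat /\ p i <= q < p (S i)).
  { induction j; intros Hj Hlt; [lra|]. destruct (Rle_dec (p j) q); [exists j; split; [lia|lra]|].
    destruct (IHj ltac:(lia) ltac:(lra)) as [i [Hi1 Hi2]]. exists i; split; [lia|auto]. }
  destruct (Ex n (le_n n) ltac:(lra)) as [i [Hi [Hi1 Hi2]]].
  assert (Hr : r <= p (S i)).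
  { destruct (Rle_dec r (p (S i))) as [X|X]; auto. exfalso.
    assert (Hb : bksupp k (p (S i))) by (apply bksupp_iff; fold q r; lra).
    specialize (HN (p (S i)) k ltac:(apply in_map, in_seq; lia) Hb). lia. }
  destruct (Hsl i Hi) as [_ [e He]].
  intros t Ht. apply bksupp_iff in Ht. revert t Ht.
  apply (affine_self_map_id h q r (powerRZ 2 e)); auto using powerRZ2_pos.
  - intros s Hs. rewrite (He s), <- Hq at 1 by lra. rewrite (He q) by lra. ring.
  - intros s Hs. rewrite Hm by (apply bksupp_iff; auto). apply bksupp_iff, bk_pow_in, bksupp_iff; auto.
  - intros u Hu. exists (zpow (bk k) (- m) u). assert (Iu : bksupp k u) by (apply bksupp_iff; auto).
    split; [apply bksupp_iff, bk_pow_in; auto|].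
    rewrite Hm by (apply bk_pow_in; auto). apply zpow_cancel', bij_bk.
Qed.

Lemma gen2_prodl : forall F L, (forall k, gen2 a b (F k)) -> gen2 a b (prodl F L).
Proof. intros F L H; induction L; simpl; [constructor|constructor; auto]. Qed.

(* h agrees with b_k^(m k) on the support of each b_k, is the identity off these
   supports, and m k = 0 for |k| > N: so h is the finite product of the b_k^(m k). *)
Theorem centralizer_bk : forall h, Vel h -> comm_all_bk h -> gen2 a b h.
Proof.
  intros h Vh Ck.
  assert (HM : forall k, {m | forall t, bksupp k t -> h t = zpow (bk k) m t}).
  { intros k; apply constructive_indefinite_description. apply (comm_bk_local h k Vh (Ck k)). }
  set (mk := fun k => proj1_sig (HM k)).
  assert (Hmk : forall k t, bksupp k t -> h t = zpow (bk k) (mk k) t) by (intros k; exact (proj2_sig (HM k))).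
  destruct (comm_all_bk_finite_support h Vh Ck) as [N HN].
  set (P := prodl (fun k => zpow (bk k) (mk k)) (zrange N)).
  assert (Out : forall t, (forall k, ~ bksupp k t) -> P t = t) by (intros t H; apply prodl_out; auto).
  assert (E : h = P).
  { apply functional_extensionality; intros t.
    destruct (classic (in01 t)) as [Ht|Ht].
    2: { destruct Vh as [V1 _]. rewrite V1 by auto. symmetry; apply Out. intros k Hk.
         unfold bksupp in Hk. rewrite A_out in Hk by auto. apply Ht. unfold bsupp in Hk; unfold in01; lra. }
    destruct (Req_dec t 0) as [->|T0].
    { rewrite (comm_all_bk_fixes_0 h Vh Ck). symmetry; apply Out. intros k Hk.
      unfold bksupp in Hk. rewrite A_0 in Hk. unfold bsupp in Hk; lra. }
    destruct (fdom_covers t ltac:(unfold in01 in Ht; lra)) as [k [[K1|K1] K2]].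
    - assert (Ik : bksupp k t) by (unfold bksupp, bsupp; lra).
      destruct (Z_le_gt_dec (Z.abs k) (Z.of_nat N)) as [L|L].
      + rewrite (Hmk k t Ik). unfold P. rewrite (prodl_in mk (zrange N) k t); auto using zrange_NoDup.
        apply zrange_In; lia.
      + rewrite (HN k ltac:(lia) t Ik). symmetry. apply (prodl_notin mk (zrange N) k t); auto.
        rewrite zrange_In; lia.
    - assert (Tq : t = A k (1/2)) by (rewrite K1, A_cancel'; reflexivity).
      rewrite Out.
      + destruct (comm_bk_local h k Vh (Ck k)) as [L _]. rewrite Tq; auto.
      + intros l Il. unfold bksupp, bsupp in Il.
        assert (l = k) by (apply (fdom_unique l k t); unfold fdom; lra). subst l. lra. }
  rewrite E. apply gen2_prodl. intros k; apply gen2_zpow, gen2_bk.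
Qed.

Lemma bk_shift : forall k j v, bk k (A j v) = A j (bk (k - j) v).
Proof.
  intros k j v. rewrite <- !(zpow_1 (bk _)), !bk_pow_eq, <- !A_add.
  f_equal; [lia|]. f_equal. f_equal. lia.
Qed.

Lemma comm_all_bk_conj : forall h j, comm_all_bk h -> comm_all_bk (mul (mul (A (- j)) h) (A j)).
Proof.
  intros h j C k t. unfold mul. rewrite bk_shift, C.
  replace (bk (k - j) (A (- j) t)) with (A (- j) (bk k t)); [reflexivity|].
  rewrite bk_shift. f_equal. f_equal. lia.
Qed.

Lemma comm_all_bk_mul : forall f g, comm_all_bk f -> comm_all_bk g -> comm_all_bk (mul f g).
Proof. intros f g Cf Cg k t; unfold mul; rewrite Cg, Cf; reflexivity. Qed.

Lemma comm_all_bk_inv : forall h, bij h -> comm_all_bk h -> comm_all_bk (inv h).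
Proof.
  intros h Bh C k t. apply (bij_inj h); auto. rewrite <- C. destruct Bh as [B1 B2]. rewrite !B2; reflexivity.
Qed.

Lemma comm_all_bk_b : comm_all_bk b.
Proof.
  intros k t. assert (E : b = bk 0) by (unfold bk; apply functional_extensionality; reflexivity).
  rewrite E. exact (f_equal (fun F => F t) (bk_comm 0 k)).
Qed.

Lemma gen2_normal_form : forall g, gen2 a b g ->
  exists j h, gen01 h /\ comm_all_bk h /\ g = mul (A j) h.
Proof.
  intros g G; induction G.
  - exists 1%Z, one. split; [constructor|split; [intros k t; reflexivity|reflexivity]].
  - exists 0%Z, b. split; [apply gen01_b|split; [apply comm_all_bk_b|reflexivity]].
  - exists 0%Z, one. split; [constructor|split; [intros k t; reflexivity|reflexivity]].
  - destruct IHG1 as [j1 [h1 [Gh1 [C1 E1]]]]. destruct IHG2 as [j2 [h2 [Gh2 [C2 E2]]]].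
    exists (j1 + j2)%Z, (mul (mul (mul (A (- j2)) h1) (A j2)) h2). split; [|split].
    + apply gen01_mul; [apply gen01_mul; [apply gen01_mul|]|]; auto using gen01_A.
    + apply comm_all_bk_mul; [apply comm_all_bk_conj|]; auto.
    + subst. apply functional_extensionality; intros t. unfold mul.
      rewrite <- (A_add (j1 + j2) (- j2)). replace (j1 + j2 + - j2)%Z with j1 by lia. reflexivity.
  - destruct IHG as [j [h [Gh [C E]]]].
    assert (Bh : bij h) by (apply gen01_bij; auto).
    exists (- j)%Z, (mul (mul (A (- - j)) (inv h)) (A (- j))). split; [|split].
    + apply gen01_mul; [apply gen01_mul|]; auto using gen01_A, gen01_inv.
    + apply comm_all_bk_conj, comm_all_bk_inv; auto.
    + subst. rewrite inv_mul by auto using bij_A. unfold A at 1. rewrite inv_zpow by apply bij_a.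
      apply functional_extensionality; intros t. unfold mul. rewrite A_cancel. reflexivity.
Qed.

Lemma square_x0_pow : forall j, mul (zpow x0 j) (zpow x0 j) = A j.
Proof.
  intros j. rewrite zpow_mul_eq by apply bij_x0. apply functional_extensionality; intros t.
  unfold A. change a with (zpow x0 2). rewrite zpow_zpow by apply bij_x0. f_equal. lia.
Qed.

Lemma bk_as_conj : forall k,
  bk k = mul (mul (mul (mul (inv (zpow x0 k)) (inv (zpow x0 k))) b) (zpow x0 k)) (zpow x0 k).
Proof.
  intros k. rewrite inv_zpow by apply bij_x0. apply functional_extensionality; intros t.
  unfold mul. rewrite <- (zpow_1 (bk k)), bk_pow_eq, zpow_1. unfold A. change a with (zpow x0 2).
  rewrite !zpow_zpow, <- !zpow_add by apply bij_x0. f_equal; [lia|]. f_equal. f_equal. lia.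
Qed.

Lemma x0_pow_comm : forall j, mul (zpow x0 j) x0 = mul x0 (zpow x0 j).
Proof.
  intros j; apply functional_extensionality; intros t; unfold mul.
  rewrite <- (zpow_1 x0 (zpow x0 j t)), <- (zpow_1 x0 t), <- !zpow_add by apply bij_x0. f_equal; lia.
Qed.

(** * The defining formula *)

(* b as a word in the parameters x0 = tpar 0 and x1 = tpar 1. *)
Definition tb : term := tmul (tmul (tmul (tpar 1) (tinv (tpar 0))) (tinv (tpar 1))) (tpar 0).
Definition fcomm (t1 t2 : term) : formula := feq (tmul t1 t2) (tmul t2 t1).
Definition fimp (p q : formula) : formula := fnot (fand p (fnot q)).
Definition fall (n : nat) (p : formula) : formula := fnot (fex n (fnot p)).

(* "z (variable 3) is w^-2 b w^2 for some w commuting with x0", i.e. z is some b_k. *)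
Definition is_bk : formula :=
  fex 4 (fand (fcomm (tvar 4) (tpar 0))
              (feq (tvar 3) (tmul (tmul (tmul (tmul (tinv (tvar 4)) (tinv (tvar 4))) tb) (tvar 4)) (tvar 4)))).

Definition cent_bk : formula := fall 3 (fimp is_bk (fcomm (tvar 2) (tvar 3))).

Definition phi : formula :=
  fex 1 (fex 2 (fand (fcomm (tvar 1) (tpar 0))
                     (fand cent_bk (feq (tvar 0) (tmul (tmul (tvar 1) (tvar 1)) (tvar 2)))))).

Definition ps : list (R -> R) := x0 :: x1 :: nil.

Lemma sat_phi : forall D g,
  sat D ps (fun n => match n with O => g | S _ => one end) phi <->
  exists y, D y /\ exists h, D h /\ mul y x0 = mul x0 y /\
    (forall z, D z -> (exists w, D w /\ mul w x0 = mul x0 w /\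
                         z = mul (mul (mul (mul (inv w) (inv w)) b) w) w) -> mul h z = mul z h) /\
    g = mul (mul y y) h.
Proof.
  intros D g. simpl. unfold upd; simpl. split.
  - intros [y [Dy [h [Dh [C1 [C2 E]]]]]]. exists y; split; [exact Dy|]; exists h; split; [exact Dh|].
    split; [exact C1|split; [|exact E]].
    intros z Dz Kw. apply NNPP; intros N. apply C2. exists z; split; [exact Dz|].
    intros N2; apply N2; split; [exact Kw|exact N].
  - intros [y [Dy [h [Dh [C1 [C2 E]]]]]]. exists y; split; [exact Dy|]; exists h; split; [exact Dh|].
    split; [exact C1|split; [|exact E]].
    intros [z [Dz N]]. apply N. intros [Kw N2]. apply N2. apply C2; [exact Dz|exact Kw].
Qed.

Theorem phi_defines_gen2 : forall D, (forall f, D f -> Vel f) -> (forall f, gen01 f -> D f) ->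
  defines D ps phi (gen2 a b).
Proof.
  intros D DV GD g Dg. rewrite sat_phi. split.
  - intros [y [Dy [h [Dh [Cy [Ch E]]]]]].
    destruct (centralizer_x0 y (DV y Dy) Cy) as [j ->].
    assert (Hc : comm_all_bk h).
    { intros k t. assert (Z : mul h (bk k) = mul (bk k) h).
      { apply Ch; [apply GD, gen01_bk|]. exists (zpow x0 k).
        split; [apply GD, gen01_zpow, gen01_x0|split; [apply x0_pow_comm|apply bk_as_conj]]. }
      exact (f_equal (fun F => F t) Z). }
    rewrite E, square_x0_pow. apply gen2_mul; [apply gen2_zpow, gen2_l|apply centralizer_bk; auto].
  - intros G. destruct (gen2_normal_form g G) as [j [h [Gh [Ch E]]]].
    exists (zpow x0 j); split; [apply GD, gen01_zpow, gen01_x0|].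
    exists h; split; [apply GD; auto|]. split; [apply x0_pow_comm|split].
    + intros z Dz [w [Dw [Cw Ez]]]. destruct (centralizer_x0 w (DV w Dw) Cw) as [i ->].
      rewrite <- bk_as_conj in Ez. subst z.
      apply functional_extensionality; intros t; unfold mul; apply Ch.
    + rewrite square_x0_pow; auto.
Qed.

Theorem proposition3p3 :
  Fel x0 /\ Fel x1 /\
  (forall k l : Z, mul (bk k) (bk l) = mul (bk l) (bk k)) /\
  (forall (N : nat) (n : Z -> Z) (m : Z),
      mul (zprod N (fun k => zpow (bk k) (n k))) (zpow a m) = one ->
      m = 0%Z /\ forall k, (- Z.of_nat N <= k <= Z.of_nat N)%Z -> n k = 0%Z) /\
  exists (phi : formula) (ps : list (R -> R)),
    Forall Fel ps /\
    defines Fel ps phi (gen2 a b) /\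
    defines Tel ps phi (gen2 a b) /\
    defines Vel ps phi (gen2 a b).
Proof.
  pose proof (gen01_F x0 gen01_x0) as Fx0. pose proof (gen01_F x1 gen01_x1) as Fx1.
  split; [exact Fx0|split; [exact Fx1|split; [exact bk_comm|split; [exact freeness|]]]].
  exists phi, ps. split; [apply Forall_cons, Forall_cons, Forall_nil; auto|].
  split; [|split]; apply phi_defines_gen2; try (intros f H; apply H).
  - exact gen01_F.
  - exact gen01_T.
  - exact gen01_V.
Qed.
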